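(* Consider the multi-sender unicast index-coding instance with $N=5$ messages, $K=3$ senders with $\mathcal S_1=\{1,2,3\}$, $\mathcal S_2=\{2,3,4\}$, $\mathcal S_3=\{1,2,4,5\}$, each with link capacity $C_k=1$, and receiver side information $\mathcal A_1=\{4,5\}$, $\mathcal A_2=\{1,3,5\}$, $\mathcal A_3=\{1,2\}$, $\mathcal A_4=\{2,3,5\}$, $\mathcal A_5=\{3\}$. Its capacity region is $$\mathcal C=\left\{(R_1,\dots,R_5)\in\mathbb R_+^5:\begin{array}{l}R_3\le2,\ R_5\le1,\ R_1+R_3\le3,\ R_1+R_5\le2,\ R_4+R_5\le2,\\ R_1+R_2+R_5\le3,\ R_1+R_4+R_5\le3,\ R_2+R_4+R_5\le3,\ R_3+R_4+R_5\le3\end{array}\right\}.$$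
   Context: Model. $N$ independent messages $M_1,\dots,M_N$, $M_j$ uniform on $[1:2^{nR_j}]$ ($n$ the block length). Sender $k$ knows the messages $M_i$, $i\in\mathcal S_k$, and sends an index $L_k=f_k((M_i)_{i\in\mathcal S_k})\in[1:2^{nC_k})=\{1,\dots,2^{\lfloor nC_k\rfloor}\}$ over a noiseless broadcast link reaching all receivers. Receiver $j$ knows $M_i$, $i\in\mathcal A_j$, and must output an estimate $\hat M_j=g_j(L_1,\dots,L_K,(M_i)_{i\in\mathcal A_j})$ of $M_j$. A rate tuple is achievable if there exist such codes with $\Pr[(\hat M_1,\dots,\hat M_N)\ne(M_1,\dots,M_N)]\to0$ as $n\to\infty$; the capacity region $\mathcal C$ is the closure of the set of achievable rate tuples. *)

From Stdlib Require Import Reals List Arith ZArith.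
Import ListNotations.
Open Scope R_scope.

(* A message tuple is a list of
   naturals of length N; message j is its (j-1)-th entry.  Message j takes
   values in {0,...,2^floor(n R_j) - 1} (a relabelling of [1:2^{nR_j}]),
   sender k's index L_k takes values in {0,...,2^floor(n C_k) - 1}. *)

Definition msg (j : nat) (m : list nat) : nat := nth (pred j) m 0%nat.

Definition pow2floor (x : R) : nat := (2 ^ Z.to_nat (Int_part x))%nat.

Definition msize (n : nat) (Rt : nat -> R) (j : nat) : nat :=
  pow2floor (INR n * Rt j).

Definition valid_msgs (N n : nat) (Rt : nat -> R) (m : list nat) : Prop :=
  length m = N /\ forall j, (1 <= j <= N)%nat -> (msg j m < msize n Rt j)%nat.

Definition agree_on (I : list nat) (m m' : list nat) : Prop :=
  forall i, In i I -> msg i m = msg i m'.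

Record code (N K : nat) (S A : nat -> list nat) (C : nat -> R)
            (Rt : nat -> R) (n : nat) : Type := {
  enc : nat -> list nat -> nat;
  dec : nat -> list nat -> list nat -> nat; (* dec j (L_1..L_K) m = hat M_j *)
  enc_dep : forall k m m', (1 <= k <= K)%nat ->
      valid_msgs N n Rt m -> valid_msgs N n Rt m' ->
      agree_on (S k) m m' -> enc k m = enc k m';
  enc_range : forall k m, (1 <= k <= K)%nat -> valid_msgs N n Rt m ->
      (enc k m < pow2floor (INR n * C k))%nat;
  dec_dep : forall j l m m', (1 <= j <= N)%nat ->
      valid_msgs N n Rt m -> valid_msgs N n Rt m' ->
      agree_on (A j) m m' -> dec j l m = dec j l m'
}.

Arguments enc {N K S A C Rt n}.
Arguments dec {N K S A C Rt n}.

Definition sent {N K S A C Rt n} (c : code N K S A C Rt n) (m : list nat)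
  : list nat := map (fun k => enc c k m) (seq 1 K).

Definition err_event {N K S A C Rt n} (c : code N K S A C Rt n)
  (m : list nat) : bool :=
  existsb (fun j => negb (Nat.eqb (dec c j (sent c m) m) (msg j m))) (seq 1 N).

Fixpoint count_tuples (sizes : list nat) (P : list nat -> bool) : nat :=
  match sizes with
  | [] => if P [] then 1%nat else 0%nat
  | s :: ss =>
      fold_right Nat.add 0%nat
        (map (fun x => count_tuples ss (fun l => P (x :: l))) (seq 0 s))
  end.

Definition err_prob {N K S A C Rt n} (c : code N K S A C Rt n) : R :=
  let sizes := map (msize n Rt) (seq 1 N) in
  INR (count_tuples sizes (err_event c)) /
  INR (count_tuples sizes (fun _ => true)).

Definition achievable (N K : nat) (S A : nat -> list nat) (C : nat -> R)
  (Rt : nat -> R) : Prop :=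
  (forall j, (1 <= j <= N)%nat -> 0 <= Rt j) /\
  exists cs : forall n, code N K S A C Rt n,
    Un_cv (fun n => err_prob (cs n)) 0.

Definition capacity_region (N K : nat) (S A : nat -> list nat) (C : nat -> R)
  (Rt : nat -> R) : Prop :=
  forall eps, 0 < eps -> exists Rt', achievable N K S A C Rt' /\
    forall j, (1 <= j <= N)%nat -> Rabs (Rt j - Rt' j) < eps.

Definition S_ex (k : nat) : list nat :=
  match k with
  | 1%nat => [1; 2; 3]%nat
  | 2%nat => [2; 3; 4]%nat
  | 3%nat => [1; 2; 4; 5]%nat
  | _ => []
  end.

Definition A_ex (j : nat) : list nat :=
  match j with
  | 1%nat => [4; 5]%nat
  | 2%nat => [1; 3; 5]%nat
  | 3%nat => [1; 2]%nat
  | 4%nat => [2; 3; 5]%nat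
  | 5%nat => [3]%nat
  | _ => []
  end.

Definition C_ex (k : nat) : R := 1.

(* Converse: if the messages of a list [D] can be decoded one after another, every
   receiver's side information lying outside [D] or among the messages already decoded,
   then the outputs of a correct code determine all messages from those outside [D] and
   the indices of the senders that see a message of [D].  Counting message tuples then
   shows that the error probability is at least 1/2 as soon as [D] carries more bits than
   these indices; each of the nine inequalities comes from one decoding order.

   Achievability: a scheme that cuts every message into chunks of nine types and lets
   every sender transmit XORs of chunks is checked by computation to be decodable.  Giving
   type [t] the time share [l_t] of one of nine basic schemes realises any convex
   combination of them, and an explicit piecewise-affine choice of the shares covers the
   whole polytope. *)

From Stdlib Require Import Reals List Arith ZArith Lia Lra Bool FinFun.
Import ListNotations.
Open Scope nat_scope.

(** * Bit packing and XOR *)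

Fixpoint pack (ws : list nat) (f : nat -> nat) : nat :=
  match ws with
  | [] => 0
  | w :: ws' => f 0 + 2 ^ w * pack ws' (fun s => f (S s))
  end.

Fixpoint unpack (ws : list nat) (L : nat) (s : nat) : nat :=
  match ws, s with
  | [], _ => 0
  | w :: _, 0 => L mod 2 ^ w
  | w :: ws', S s' => unpack ws' (L / 2 ^ w) s'
  end.

Lemma pow2_pos w : 0 < 2 ^ w.
Proof. apply Nat.neq_0_lt_0, Nat.pow_nonzero; lia. Qed.

Lemma pack_ext ws f g :
  (forall s, s < length ws -> f s = g s) -> pack ws f = pack ws g.
Proof.
  revert f g; induction ws as [|w ws IH]; intros f g H; simpl; auto.
  rewrite (H 0) by (simpl; lia).
  rewrite (IH (fun s => f (S s)) (fun s => g (S s))); auto.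
  intros s Hs. apply H. simpl; lia.
Qed.

Lemma pack_lt ws f :
  (forall s, s < length ws -> f s < 2 ^ nth s ws 0) -> pack ws f < 2 ^ list_sum ws.
Proof.
  revert f; induction ws as [|w ws IH]; intros f H; simpl; [lia|].
  assert (H0 := H 0 ltac:(simpl; lia)); simpl in H0.
  assert (H1 := IH (fun s => f (S s)) (fun s Hs => H (S s) ltac:(simpl; lia))).
  rewrite Nat.pow_add_r.
  assert (f 0 + 2 ^ w * pack ws (fun s => f (S s)) <= 2 ^ w - 1 + 2 ^ w * (2 ^ list_sum ws - 1)).
  { apply Nat.add_le_mono; [lia|]. apply Nat.mul_le_mono_l. lia. }
  pose proof (pow2_pos w); pose proof (pow2_pos (list_sum ws)); nia.
Qed.

Lemma unpack_lt ws L s : s < length ws -> unpack ws L s < 2 ^ nth s ws 0.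
Proof.
  revert L s; induction ws as [|w ws IH]; intros L s Hs; simpl in *; [lia|].
  destruct s as [|s].
  - apply Nat.mod_upper_bound, Nat.pow_nonzero; lia.
  - apply IH; lia.
Qed.

Lemma unpack_pack ws f :
  (forall s, s < length ws -> f s < 2 ^ nth s ws 0) ->
  forall s, s < length ws -> unpack ws (pack ws f) s = f s.
Proof.
  revert f; induction ws as [|w ws IH]; intros f H s Hs; simpl in Hs; [lia|].
  assert (H0 := H 0 ltac:(simpl; lia)); simpl in H0.
  pose proof (pow2_pos w).
  destruct s as [|s]; simpl.
  - rewrite Nat.mul_comm, Nat.Div0.mod_add. apply Nat.mod_small; auto.
  - rewrite Nat.mul_comm, Nat.div_add, Nat.div_small by lia.
    apply (IH (fun s => f (S s))); [|lia].
    intros s' Hs'; apply (H (S s')); simpl; lia.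
Qed.

Lemma pack_unpack ws L : L < 2 ^ list_sum ws -> pack ws (unpack ws L) = L.
Proof.
  revert L; induction ws as [|w ws IH]; intros L HL; simpl in *; [lia|].
  pose proof (pow2_pos w).
  rewrite Nat.pow_add_r in HL.
  change (pack ws (fun s => unpack (w :: ws) L (S s))) with (pack ws (unpack ws (L / 2 ^ w))).
  rewrite IH.
  - pose proof (Nat.div_mod_eq L (2 ^ w)); lia.
  - apply Nat.Div0.div_lt_upper_bound; lia.
Qed.

Definition xorl (l : list nat) : nat := fold_right Nat.lxor 0 l.

Lemma lxor_lt_pow2 a b w : a < 2 ^ w -> b < 2 ^ w -> Nat.lxor a b < 2 ^ w.
Proof.
  intros Ha Hb.
  destruct (Nat.eq_dec (Nat.lxor a b) 0) as [E|E]; [rewrite E; apply pow2_pos|].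
  apply Nat.log2_lt_pow2; [lia|].
  pose proof (Nat.log2_lxor a b).
  destruct (Nat.eq_dec a 0) as [->|Ea]; destruct (Nat.eq_dec b 0) as [->|Eb].
  - rewrite Nat.lxor_0_l in E; lia.
  - rewrite Nat.lxor_0_l. apply Nat.log2_lt_pow2 in Hb; lia.
  - rewrite Nat.lxor_0_r. apply Nat.log2_lt_pow2 in Ha; lia.
  - apply Nat.log2_lt_pow2 in Ha; [|lia]. apply Nat.log2_lt_pow2 in Hb; lia.
Qed.

Lemma xorl_lt_pow2 l w : (forall x, In x l -> x < 2 ^ w) -> xorl l < 2 ^ w.
Proof.
  induction l as [|a l IH]; intros H; simpl.
  - apply pow2_pos.
  - apply lxor_lt_pow2; [apply H; now left | apply IH; intros; apply H; now right].
Qed.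

Lemma xorl_app l1 l2 : xorl (l1 ++ l2) = Nat.lxor (xorl l1) (xorl l2).
Proof.
  induction l1 as [|a l1 IH]; simpl.
  - now rewrite Nat.lxor_0_l.
  - now rewrite IH, Nat.lxor_assoc.
Qed.

Lemma xorl_flat_map {X Y : Type} (g : Y -> nat) (h : X -> list Y) (l : list X) :
  xorl (map (fun x => xorl (map g (h x))) l) = xorl (map g (flat_map h l)).
Proof.
  induction l as [|a l IH]; simpl; auto.
  now rewrite map_app, xorl_app, IH.
Qed.

Lemma xorl_map_lxor {X : Type} (g h : X -> nat) (l : list X) :
  xorl (map (fun x => Nat.lxor (g x) (h x)) l) = Nat.lxor (xorl (map g l)) (xorl (map h l)).
Proof.
  induction l as [|a l IH]; simpl; auto.
  rewrite IH, !Nat.lxor_assoc. f_equal.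
  rewrite <- !Nat.lxor_assoc. f_equal. apply Nat.lxor_comm.
Qed.

Section XorParity.
Variable X : Type.
Variable eq_dec : forall x y : X, {x = y} + {x <> y}.

Let indicator (a : X) (v : nat) (r : X) : nat := if eq_dec r a then v else 0.

Lemma xorl_indicator_notin U a v : ~ In a U -> xorl (map (indicator a v) U) = 0.
Proof.
  unfold indicator; induction U as [|c U IH]; intros Hn; simpl; auto.
  destruct (eq_dec c a) as [->|_]; [now destruct Hn; left|].
  rewrite IH; auto. intros H; apply Hn; now right.
Qed.

Lemma xorl_indicator U a v : NoDup U -> In a U -> xorl (map (indicator a v) U) = v.
Proof.
  induction U as [|b U IH]; intros Hn Hin; [destruct Hin|]; inversion Hn; subst; simpl.
  unfold indicator at 1; destruct (eq_dec b a) as [->|E].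
  - rewrite xorl_indicator_notin by auto. apply Nat.lxor_0_r.
  - destruct Hin as [->|Hin]; [congruence|]. rewrite IH; auto. apply Nat.lxor_0_l.
Qed.

Lemma xorl_parity (U : list X) (f : X -> nat) (E : list X) : NoDup U -> incl E U ->
  xorl (map f E) = xorl (map (fun r => if Nat.odd (count_occ eq_dec E r) then f r else 0) U).
Proof.
  intros Hn. induction E as [|a E IH]; intros Hi.
  - simpl. clear Hn Hi. induction U as [|b U IHU]; simpl; auto. now rewrite <- IHU.
  - simpl. rewrite IH by (intros x Hx; apply Hi; now right).
    rewrite <- (xorl_indicator U a (f a)) at 1 by (auto; apply Hi; now left).
    rewrite Nat.lxor_comm, <- xorl_map_lxor. f_equal. apply map_ext. intros r. unfold indicator.
    destruct (eq_dec a r) as [<-|E1], (eq_dec a a) as [_|E2]; try congruence.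
    + rewrite Nat.odd_succ, <- Nat.negb_odd.
      destruct (Nat.odd (count_occ eq_dec E a)); simpl;
        rewrite ?Nat.lxor_nilpotent, ?Nat.lxor_0_l; auto.
    + destruct (eq_dec r a); [congruence|]. apply Nat.lxor_0_r.
Qed.

Lemma xorl_odd_occurrence (f : X -> nat) (E : list X) (a : X) :
  Nat.odd (count_occ eq_dec E a) = true ->
  (forall r, In r E -> r <> a -> Nat.even (count_occ eq_dec E r) = true) ->
  xorl (map f E) = f a.
Proof.
  intros Ha Hr.
  assert (HaE : In a E).
  { apply (count_occ_In eq_dec). destruct (count_occ eq_dec E a); [discriminate | lia]. }
  rewrite (xorl_parity (nodup eq_dec E)) by (apply NoDup_nodup || (intros x; apply nodup_In)).
  rewrite <- (xorl_indicator (nodup eq_dec E) a (f a))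
    by (apply NoDup_nodup || apply nodup_In; auto).
  f_equal. apply map_ext_in. intros r Hr'. apply nodup_In in Hr'. unfold indicator.
  destruct (eq_dec r a) as [->|Ne]; [now rewrite Ha|].
  now rewrite <- Nat.negb_even, Hr.
Qed.
End XorParity.

(** * Counting message tuples *)

Definition floor_nat (x : R) : nat := Z.to_nat (Int_part x).

Lemma floor_nat_spec x : (0 <= x -> x - 1 < INR (floor_nat x) <= x)%R.
Proof.
  intros Hx. unfold floor_nat. destruct (base_Int_part x) as [H1 H2].
  assert (Hz : (0 <= Int_part x)%Z).
  { destruct (Z_lt_le_dec (Int_part x) 0) as [Hl|Hl]; auto.
    assert (Int_part x <= -1)%Z as Hm by lia. apply IZR_le in Hm. lra. }
  rewrite INR_IZR_INZ, Z2Nat.id by auto. lra.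
Qed.

Lemma le_floor_nat a x : (INR a <= x)%R -> a <= floor_nat x.
Proof.
  intros H. destruct (floor_nat_spec x) as [H1 _]; [pose proof (pos_INR a); lra|].
  apply Nat.lt_succ_r, INR_lt. rewrite S_INR. lra.
Qed.

Lemma floor_nat_0 : floor_nat 0 = 0.
Proof. unfold floor_nat. change 0%R with (INR 0). now rewrite Int_part_INR. Qed.

Lemma msize_floor_nat n Rt j : msize n Rt j = 2 ^ floor_nat (INR n * Rt j).
Proof. reflexivity. Qed.

Fixpoint tuples (sizes : list nat) : list (list nat) :=
  match sizes with
  | [] => [[]]
  | s :: ss => flat_map (fun x => map (cons x) (tuples ss)) (seq 0 s)
  end.

Lemma count_tuples_spec sizes P : count_tuples sizes P = length (filter P (tuples sizes)).
Proof.
  revert P; induction sizes as [|s ss IH]; intros P; simpl.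
  - now destruct (P []).
  - induction (seq 0 s) as [|x xs IHx]; simpl; auto.
    rewrite filter_app, length_app, IHx, IH. f_equal.
    clear. induction (tuples ss) as [|t ts IHt]; simpl; auto.
    destruct (P (x :: t)); simpl; auto.
Qed.

Lemma In_tuples sizes l : In l (tuples sizes) <-> Forall2 lt l sizes.
Proof.
  revert l; induction sizes as [|s ss IH]; intros l; simpl.
  - split; [intros [<-|[]]; constructor | intros H; inversion H; auto].
  - rewrite in_flat_map. split.
    + intros [x [Hx Hl]]. apply in_seq in Hx. apply in_map_iff in Hl.
      destruct Hl as [t [<- Ht]]. constructor; [lia | now apply IH].
    + intros H; inversion H; subst. exists x. split.
      * apply in_seq; lia.
      * apply in_map, IH; auto.
Qed.

Lemma NoDup_tuples sizes : NoDup (tuples sizes).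
Proof.
  induction sizes as [|s ss IH]; simpl.
  - repeat constructor; auto.
  - generalize 0. induction s as [|s IHs]; intros a; simpl; [constructor|].
    apply NoDup_app.
    + apply NoDup_map_inv with (f := @tl nat). now rewrite map_map, map_id.
    + apply IHs.
    + intros x Hx Hx'. apply in_map_iff in Hx as [t [<- _]].
      apply in_flat_map in Hx' as [y [Hy Hm]]. apply in_seq in Hy.
      apply in_map_iff in Hm as [t' [Ht' _]]. injection Ht'. lia.
Qed.

Lemma length_tuples sizes : length (tuples sizes) = fold_right Nat.mul 1 sizes.
Proof.
  induction sizes as [|s ss IH]; simpl; auto.
  rewrite <- IH. clear IH. generalize 0.
  induction s as [|s IHs]; intros a; simpl; auto.
  now rewrite length_app, length_map, IHs.
Qed.

Lemma length_tuples_pow2 (e : nat -> nat) (l : list nat) :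
  length (tuples (map (fun x => 2 ^ e x) l)) = 2 ^ list_sum (map e l).
Proof.
  rewrite length_tuples. induction l as [|x l IH]; simpl; auto.
  now rewrite IH, Nat.pow_add_r.
Qed.

Lemma Forall2_lt_map_seq (f : nat -> nat) a len m :
  Forall2 lt m (map f (seq a len)) <->
  length m = len /\ forall i, i < len -> nth i m 0 < f (a + i).
Proof.
  revert a len; induction m as [|x m IH]; intros a [|len]; simpl.
  - split; [split; [auto | lia] | constructor].
  - split; [intros H; inversion H | intros [H _]; discriminate].
  - split; [intros H; inversion H | intros [H _]; discriminate].
  - split.
    + intros H; inversion H; subst. apply IH in H5 as [-> H5]. split; auto.
      intros [|i] Hi; [now rewrite Nat.add_0_r|].
      replace (a + S i) with (S a + i) by lia. apply H5; lia.
    + intros [[= Hl] H]. constructor.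
      * specialize (H 0 ltac:(lia)). now rewrite Nat.add_0_r in H.
      * apply IH. split; auto. intros i Hi.
        replace (S a + i) with (a + S i) by lia. apply (H (S i)); lia.
Qed.

Definition msg_sizes (N n : nat) (Rt : nat -> R) : list nat := map (msize n Rt) (seq 1 N).

Lemma length_tuples_msg_sizes N n Rt :
  length (tuples (msg_sizes N n Rt)) =
    2 ^ list_sum (map (fun j => floor_nat (INR n * Rt j)) (seq 1 N)).
Proof. apply length_tuples_pow2. Qed.

Lemma valid_msgs_In_tuples N n Rt m :
  valid_msgs N n Rt m <-> In m (tuples (msg_sizes N n Rt)).
Proof.
  unfold valid_msgs, msg_sizes, msg. rewrite In_tuples, Forall2_lt_map_seq.
  split; intros [Hl H]; split; auto; intros i Hi.
  - apply (H (1 + i)); lia.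
  - replace (pred i) with (i - 1) by lia. replace i with (1 + (i - 1)) at 2 by lia. apply H; lia.
Qed.

Lemma msgs_ext N n Rt m m' : valid_msgs N n Rt m -> valid_msgs N n Rt m' ->
  (forall j, 1 <= j <= N -> msg j m = msg j m') -> m = m'.
Proof.
  intros [Hl _] [Hl' _] H. apply nth_ext with 0 0; [congruence|].
  intros i Hi. apply (H (S i)); lia.
Qed.

Section Codes.
Context {N K : nat} {S A : nat -> list nat} {C Rt : nat -> R} {n : nat}.
Variable c : code N K S A C Rt n.

Lemma nth_sent k m : 1 <= k <= K -> nth (pred k) (sent c m) 0 = enc c k m.
Proof.
  intros Hk. unfold sent.
  rewrite nth_indep with (d' := enc c 0 m) by (rewrite length_map, length_seq; lia).
  rewrite (map_nth (fun k => enc c k m)), seq_nth by lia. f_equal; lia.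
Qed.

Lemma err_event_false m :
  err_event c m = false <-> forall j, 1 <= j <= N -> dec c j (sent c m) m = msg j m.
Proof.
  unfold err_event. rewrite <- not_true_iff_false, existsb_exists. split.
  - intros H j Hj. destruct (Nat.eq_dec (dec c j (sent c m) m) (msg j m)) as [E|E]; auto.
    exfalso; apply H. exists j. split; [apply in_seq; lia|]. now apply negb_true_iff, Nat.eqb_neq.
  - intros H [j [Hj E]]. apply in_seq in Hj. apply negb_true_iff, Nat.eqb_neq in E.
    apply E, H; lia.
Qed.

Lemma err_prob_zero : (forall m, valid_msgs N n Rt m -> err_event c m = false) -> err_prob c = 0%R.
Proof.
  intros H. unfold err_prob. cbv zeta. fold (msg_sizes N n Rt).
  rewrite count_tuples_spec.
  replace (filter (err_event c) (tuples (msg_sizes N n Rt))) with (@nil (list nat)).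
  - unfold Rdiv. apply Rmult_0_l.
  - rewrite <- (filter_false (tuples (msg_sizes N n Rt))). symmetry. apply filter_ext_in.
    intros m Hm. now apply H, valid_msgs_In_tuples.
Qed.

Lemma err_prob_ge_half {X : Type} (T : list X) (phi : list nat -> X) :
  NoDup T ->
  (forall m, valid_msgs N n Rt m -> err_event c m = false -> In (phi m) T) ->
  (forall m m', valid_msgs N n Rt m -> valid_msgs N n Rt m' -> err_event c m = false ->
     err_event c m' = false -> phi m = phi m' -> m = m') ->
  2 * length T <= length (tuples (msg_sizes N n Rt)) ->
  (err_prob c >= 1 / 2)%R.
Proof.
  intros HT Hrange Hinj Hsize.
  set (all := tuples (msg_sizes N n Rt)) in *.
  set (good := filter (fun m => negb (err_event c m)) all).
  assert (Hgood : forall m, In m good <-> valid_msgs N n Rt m /\ err_event c m = false).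
  { intros m. unfold good. rewrite filter_In, negb_true_iff, valid_msgs_In_tuples. tauto. }
  assert (Hcount : length good <= length T).
  { rewrite <- (length_map phi). apply NoDup_incl_length.
    - apply Injective_map_NoDup_in.
      + intros x y Hx Hy. apply Hgood in Hx, Hy. apply Hinj; tauto.
      + apply NoDup_filter, NoDup_tuples.
    - intros y Hy. apply in_map_iff in Hy as [x [<- Hx]]. apply Hgood in Hx. apply Hrange; tauto. }
  pose proof (filter_length (err_event c) all) as Hsplit. fold good in Hsplit.
  unfold err_prob. cbv zeta. fold (msg_sizes N n Rt). rewrite !count_tuples_spec, filter_true.
  fold all. set (bad := length (filter (err_event c) all)) in *.
  assert (Hbad : length all <= 2 * bad) by lia.
  assert (Hpos : (0 < INR (length all))%R).
  { unfold all. rewrite length_tuples_msg_sizes. apply lt_0_INR, pow2_pos. }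
  apply le_INR in Hbad. rewrite mult_INR in Hbad. simpl in Hbad.
  apply Rle_ge, Rmult_le_reg_r with (INR (length all)); auto.
  replace (INR bad / INR (length all) * INR (length all))%R with (INR bad) by (field; lra). lra.
Qed.
End Codes.

(** * Rate sums and the capacity region *)

Definition sum_over (f : nat -> R) (l : list nat) : R :=
  fold_right (fun x acc => f x + acc)%R 0%R l.

Lemma sum_over_close f g l eps :
  (forall x, In x l -> Rabs (f x - g x) < eps)%R ->
  (sum_over f l - INR (length l) * eps <= sum_over g l)%R.
Proof.
  unfold sum_over; induction l as [|x l IH]; intros H; cbn [fold_right length]; [simpl; lra|].
  pose proof (Rabs_def2 _ _ (H x (or_introl eq_refl))).
  pose proof (IH (fun y Hy => H y (or_intror Hy))). rewrite S_INR. lra.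
Qed.

Lemma sum_floor_bounds (r : R) (f : nat -> R) (l : list nat) :
  (0 <= r)%R -> (forall x, In x l -> 0 <= f x)%R ->
  (r * sum_over f l - INR (length l) <= INR (list_sum (map (fun x => floor_nat (r * f x)) l))
     <= r * sum_over f l)%R.
Proof.
  intros Hr. unfold sum_over, list_sum.
  induction l as [|x l IH]; intros H; cbn [fold_right length map]; [simpl; lra|].
  rewrite plus_INR, S_INR.
  destruct (floor_nat_spec (r * f x)) as [H1 H2]; [apply Rmult_le_pos; auto; apply H; now left|].
  destruct IH as [H3 H4]; [intros; apply H; now right|]. lra.
Qed.

Lemma capacity_region_nonneg N K S A C Rt :
  capacity_region N K S A C Rt -> forall j, 1 <= j <= N -> (0 <= Rt j)%R.
Proof.
  intros Hc j Hj. destruct (Rle_or_lt 0 (Rt j)) as [H|H]; auto.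
  destruct (Hc (- Rt j)%R) as [Rt' [[Hnn _] Hcl]]; [lra|].
  specialize (Hcl j Hj). specialize (Hnn j Hj). apply Rabs_def2 in Hcl. lra.
Qed.

Lemma capacity_region_sum_le N K S A C (D Ks : list nat) :
  (forall k, In k Ks -> 0 <= C k)%R -> incl D (seq 1 N) ->
  (forall Rt n (c : code N K S A C Rt n),
     list_sum (map (fun k => floor_nat (INR n * C k)) Ks) <
       list_sum (map (fun j => floor_nat (INR n * Rt j)) D) ->
     (err_prob c >= 1 / 2)%R) ->
  forall Rt, capacity_region N K S A C Rt -> (sum_over Rt D <= sum_over C Ks)%R.
Proof.
  intros HC HD Hconv Rt Hc.
  destruct (Rle_or_lt (sum_over Rt D) (sum_over C Ks)) as [Hle|Hlt]; auto. exfalso.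
  set (d := (sum_over Rt D - sum_over C Ks)%R).
  set (L := INR (length D)).
  assert (HL : (0 <= L)%R) by apply pos_INR.
  assert (Heps : (0 < d / (2 * (L + 1)))%R) by (apply Rdiv_lt_0_compat; unfold d; lra).
  destruct (Hc _ Heps) as [Rt' [[Hnn [cs Hcv]] Hcl]].
  assert (HDr : forall j, In j D -> 1 <= j <= N) by (intros j Hj; apply HD, in_seq in Hj; lia).
  assert (Hclose := sum_over_close Rt Rt' D _ (fun j Hj => Hcl j (HDr j Hj))).
  fold L in Hclose.
  assert (Hgap : (sum_over C Ks + d / 2 <= sum_over Rt' D)%R).
  { replace (L * (d / (2 * (L + 1))))%R with (d / 2 - d / (2 * (L + 1)))%R in Hclose
      by (field; lra).
    unfold d in *; lra. }
  destruct (INR_archimed (d / 2) L) as [n0 Hn0]; [unfold d; lra|].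
  destruct (Hcv (1 / 2)%R) as [n1 Hn1]; [lra|].
  set (n := Nat.max n0 n1).
  specialize (Hn1 n ltac:(lia)). unfold R_dist in Hn1. rewrite Rminus_0_r in Hn1.
  apply Rabs_def2 in Hn1.
  enough (err_prob (cs n) >= 1 / 2)%R by lra.
  apply Hconv, INR_lt.
  assert (Hn : (INR n0 <= INR n)%R) by (apply le_INR; lia).
  destruct (sum_floor_bounds (INR n) C Ks) as [_ HKs]; [apply pos_INR | auto |].
  destruct (sum_floor_bounds (INR n) Rt' D) as [HD' _]; [apply pos_INR | |].
  { intros j Hj. apply Hnn, HDr, Hj. }
  fold L in HD'.
  assert (INR n * (sum_over C Ks + d / 2) <= INR n * sum_over Rt' D)%R
    by (apply Rmult_le_compat_l; [apply pos_INR | lra]).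
  assert (INR n0 * (d / 2) <= INR n * (d / 2))%R by (apply Rmult_le_compat_r; unfold d; lra).
  lra.
Qed.

(** * Bounds from decoding orders *)

Definition mem (x : nat) (l : list nat) : bool := existsb (Nat.eqb x) l.

Lemma mem_In x l : mem x l = true <-> In x l.
Proof.
  unfold mem. rewrite existsb_exists. split.
  - intros [y [Hy E]]. apply Nat.eqb_eq in E. now subst.
  - intros H. exists x. split; auto. apply Nat.eqb_refl.
Qed.

Lemma app_inv_length {X : Type} (l1 l2 l1' l2' : list X) :
  length l1 = length l1' -> l1 ++ l2 = l1' ++ l2' -> l1 = l1' /\ l2 = l2'.
Proof.
  revert l1'; induction l1 as [|x l1 IH]; intros [|x' l1'] Hl He; try discriminate; auto.
  injection He as -> He. destruct (IH l1') as [-> ->]; auto.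
Qed.

Lemma Forall2_map_same {X Y Z : Type} (P : Y -> Z -> Prop) (f : X -> Y) (g : X -> Z) l :
  (forall x, In x l -> P (f x) (g x)) -> Forall2 P (map f l) (map g l).
Proof.
  induction l as [|x l IH]; intros H; simpl; constructor.
  - apply H; now left.
  - apply IH; intros; apply H; now right.
Qed.

Lemma length_tuples_app a b : length (tuples (a ++ b)) = length (tuples a) * length (tuples b).
Proof. rewrite !length_tuples. induction a as [|x a IH]; simpl; lia. Qed.

Lemma list_sum_remove_one (h : nat -> nat) l d : NoDup l -> In d l ->
  list_sum (map h l) = list_sum (map (fun x => if x =? d then 0 else h x) l) + h d.
Proof.
  induction l as [|x l IH]; intros Hn Hd; [destruct Hd|]. inversion Hn; subst. simpl.
  destruct (Nat.eqb_spec x d) as [->|Ne].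
  - replace (list_sum (map (fun y => if y =? d then 0 else h y) l))
      with (list_sum (map h l)); [lia|].
    f_equal. apply map_ext_in. intros y Hy. destruct (Nat.eqb_spec y d); congruence.
  - destruct Hd as [->|Hd]; [congruence|]. rewrite IH; auto. lia.
Qed.

Lemma list_sum_mem_split (f : nat -> nat) l D : NoDup l -> NoDup D -> incl D l ->
  list_sum (map f l) = list_sum (map (fun x => if mem x D then 0 else f x) l) + list_sum (map f D).
Proof.
  intros Hl. induction D as [|d D IH]; intros HD Hi; simpl.
  - now rewrite Nat.add_0_r.
  - inversion HD; subst.
    assert (Hd : In d l) by (apply Hi; now left).
    rewrite IH, (list_sum_remove_one _ l d) by (auto; intros x Hx; apply Hi; now right).
    replace (mem d D) with false by (symmetry; apply not_true_iff_false; now rewrite mem_In).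
    enough (map (fun x => if x =? d then 0 else if mem x D then 0 else f x) l =
            map (fun x => if (x =? d) || mem x D then 0 else f x) l) as -> by lia.
    apply map_ext. intros x. now destruct (x =? d), (mem x D).
Qed.

Definition outside (N : nat) (D : list nat) : list nat :=
  filter (fun j => negb (mem j D)) (seq 1 N).

Definition senders_involving (N K : nat) (S : nat -> list nat) (D : list nat) : list nat :=
  filter (fun k => negb (forallb (fun i => mem i (outside N D)) (S k))) (seq 1 K).

Fixpoint decodable_in_order (A : nat -> list nat) (known D : list nat) : bool :=
  match D with
  | [] => true
  | d :: D' => forallb (fun i => mem i known) (A d) && decodable_in_order A (d :: known) D'
  end.

Section CutSet.
Context {N K : nat} {S A : nat -> list nat} {C Rt : nat -> R} {n : nat}.
Variable c : code N K S A C Rt n.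

Lemma decodable_in_order_agree D : forall known m m',
  valid_msgs N n Rt m -> valid_msgs N n Rt m' ->
  err_event c m = false -> err_event c m' = false -> sent c m = sent c m' ->
  incl D (seq 1 N) -> decodable_in_order A known D = true ->
  (forall i, In i known -> msg i m = msg i m') ->
  forall i, In i D -> msg i m = msg i m'.
Proof.
  induction D as [|d D IH]; intros known m m' Hv Hv' He He' Hs HD Hdec Hk i Hi; [destruct Hi|].
  simpl in Hdec. apply andb_true_iff in Hdec as [Hd Hdec]. rewrite forallb_forall in Hd.
  assert (Hd1 : 1 <= d <= N).
  { assert (In d (seq 1 N)) as H by (apply HD; now left). apply in_seq in H; lia. }
  assert (Emsg : msg d m = msg d m').
  { rewrite <- (proj1 (err_event_false c m) He d Hd1), <- (proj1 (err_event_false c m') He' d Hd1).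
    rewrite Hs.
    apply (dec_dep _ _ _ _ _ _ _ c); auto.
    intros x Hx. apply Hk, mem_In, Hd, Hx. }
  destruct Hi as [<-|Hi]; auto.
  apply (IH (d :: known) m m'); auto.
  - intros x Hx; apply HD; now right.
  - intros x [<-|Hx]; auto.
Qed.

Lemma determined_by_outside_and_senders D m m' :
  incl D (seq 1 N) -> decodable_in_order A (outside N D) D = true ->
  valid_msgs N n Rt m -> valid_msgs N n Rt m' ->
  err_event c m = false -> err_event c m' = false ->
  (forall i, In i (outside N D) -> msg i m = msg i m') ->
  (forall k, In k (senders_involving N K S D) -> enc c k m = enc c k m') ->
  m = m'.
Proof.
  intros HD Hdec Hv Hv' He He' Hout Hsnd.
  assert (Hsent : sent c m = sent c m').
  { unfold sent. apply map_ext_in. intros k Hk. apply in_seq in Hk.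
    destruct (forallb (fun i => mem i (outside N D)) (S k)) eqn:Hall.
    - apply (enc_dep _ _ _ _ _ _ _ c); auto; [lia|].
      intros i Hi. rewrite forallb_forall in Hall. apply Hout, mem_In, Hall, Hi.
    - apply Hsnd. unfold senders_involving. apply filter_In.
      rewrite Hall. split; [apply in_seq; lia | reflexivity]. }
  apply (msgs_ext N n Rt); auto. intros j Hj.
  destruct (mem j D) eqn:HjD.
  - apply (decodable_in_order_agree D (outside N D)); auto. now apply mem_In.
  - apply Hout. unfold outside. apply filter_In. split; [apply in_seq; lia | now rewrite HjD].
Qed.

Lemma err_prob_ge_half_of_decodable D :
  NoDup D -> incl D (seq 1 N) -> decodable_in_order A (outside N D) D = true ->
  list_sum (map (fun k => floor_nat (INR n * C k)) (senders_involving N K S D)) <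
    list_sum (map (fun j => floor_nat (INR n * Rt j)) D) ->
  (err_prob c >= 1 / 2)%R.
Proof.
  intros HnD HD Hdec Hbits.
  set (Ks := senders_involving N K S D) in *.
  set (e j := floor_nat (INR n * Rt j)).
  set (e_out j := if mem j D then 0 else e j).
  apply (err_prob_ge_half c
    (tuples (map (fun j => 2 ^ e_out j) (seq 1 N) ++ map (fun k => 2 ^ floor_nat (INR n * C k)) Ks))
    (fun m => map (fun j => if mem j D then 0 else msg j m) (seq 1 N) ++
              map (fun k => enc c k m) Ks)).
  - apply NoDup_tuples.
  - intros m Hv _. apply In_tuples, Forall2_app; apply Forall2_map_same.
    + intros j Hj. apply in_seq in Hj. unfold e_out. destruct (mem j D); [apply pow2_pos|].
      apply Hv. lia.
    + intros k Hk. unfold Ks, senders_involving in Hk. apply filter_In in Hk as [Hk _].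
      apply in_seq in Hk. apply (enc_range _ _ _ _ _ _ _ c); auto; lia.
  - intros m m' Hv Hv' He He' Hphi.
    apply app_inv_length in Hphi as [Hout Hsnd]; [|now rewrite !length_map].
    apply (determined_by_outside_and_senders D); auto.
    + intros i Hi. unfold outside in Hi. apply filter_In in Hi as [Hi HiD].
      apply negb_true_iff in HiD. pose proof (proj1 map_ext_in_iff Hout i Hi) as H.
      cbv beta in H. now rewrite HiD in H.
    + apply (proj1 map_ext_in_iff Hsnd).
  - rewrite length_tuples_app, !length_tuples_pow2, length_tuples_msg_sizes. fold e.
    rewrite (list_sum_mem_split e (seq 1 N) D), Nat.pow_add_r by (apply seq_NoDup || auto).
    fold e_out. rewrite (Nat.mul_comm 2), <- Nat.mul_assoc. apply Nat.mul_le_mono_l.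
    rewrite Nat.mul_comm, <- Nat.pow_succ_r'. apply Nat.pow_le_mono_r; [lia|]. exact Hbits.
Qed.
End CutSet.

Theorem sum_rates_le_of_decodable_in_order N K S A C D :
  NoDup D -> incl D (seq 1 N) -> decodable_in_order A (outside N D) D = true ->
  (forall k, 1 <= k <= K -> (0 <= C k)%R) ->
  forall Rt, capacity_region N K S A C Rt ->
  (sum_over Rt D <= sum_over C (senders_involving N K S D))%R.
Proof.
  intros HnD HD Hdec HC. apply capacity_region_sum_le; auto.
  - intros k Hk. unfold senders_involving in Hk. apply filter_In in Hk as [Hk _].
    apply in_seq in Hk. apply HC; lia.
  - intros Rt n c. now apply err_prob_ge_half_of_decodable.
Qed.

(** * Linear XOR schemes *)

Definition chunk_eq_dec (x y : nat * nat) : {x = y} + {x <> y}.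
Proof. decide equality; apply Nat.eq_dec. Defined.

(* [Slot k s] is slot [s] of sender [k]'s index, [Side j i] is chunk [i] of message [j]. *)
Inductive item : Type := Slot (k s : nat) | Side (j i : nat).

(* Message [j] is cut into chunks whose types are listed in [chunk_types j]; sender [k]'s
   index consists of slots of types [slot_types k], slot [s] carrying the XOR of the
   chunks [slot_chunks k s]; receiver [j] rebuilds its chunk [i] as the XOR of the items
   [recovery j i].  Chunks and slots of type [t] have a common bit width. *)
Record xor_scheme : Type := {
  chunk_types : nat -> list nat;
  slot_types : nat -> list nat;
  slot_chunks : nat -> nat -> list (nat * nat);
  recovery : nat -> nat -> list item }.

Definition expand (sc : xor_scheme) (it : item) : list (nat * nat) :=
  match it with Slot k s => slot_chunks sc k s | Side j i => [(j, i)] end.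

Section XorScheme.
Variables (N K : nat) (S A : nat -> list nat) (sc : xor_scheme).

Definition slots_valid : bool :=
  forallb (fun k => forallb (fun s => forallb (fun r =>
      mem (fst r) (S k) && (snd r <? length (chunk_types sc (fst r))) &&
      (nth (snd r) (chunk_types sc (fst r)) 0 =? nth s (slot_types sc k) 0))
    (slot_chunks sc k s)) (seq 0 (length (slot_types sc k)))) (seq 1 K).

Definition item_valid (j : nat) (it : item) : bool :=
  match it with
  | Slot k s => (1 <=? k) && (k <=? K) && (s <? length (slot_types sc k))
  | Side j' _ => mem j' (A j)
  end.

(* Every chunk other than [(j, i)] cancels out of the XOR of [recovery j i]. *)
Definition recovers (j i : nat) : bool :=
  let E := flat_map (expand sc) (recovery sc j i) in
  Nat.odd (count_occ chunk_eq_dec E (j, i)) &&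
  forallb (fun r => (if chunk_eq_dec r (j, i) then true else false) ||
                    Nat.even (count_occ chunk_eq_dec E r)) (nodup chunk_eq_dec E).

Definition xor_scheme_valid : bool :=
  slots_valid &&
  forallb (fun j => forallb (fun i => forallb (item_valid j) (recovery sc j i) && recovers j i)
    (seq 0 (length (chunk_types sc j)))) (seq 1 N).

Hypothesis Hvalid : xor_scheme_valid = true.

Lemma slot_chunk_valid k s j i : 1 <= k <= K -> s < length (slot_types sc k) ->
  In (j, i) (slot_chunks sc k s) ->
  In j (S k) /\ i < length (chunk_types sc j) /\
  nth i (chunk_types sc j) 0 = nth s (slot_types sc k) 0.
Proof.
  intros Hk Hs Hr. apply andb_true_iff in Hvalid as [H _]. unfold slots_valid in H.
  rewrite forallb_forall in H. specialize (H k ltac:(apply in_seq; lia)).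
  rewrite forallb_forall in H. specialize (H s ltac:(apply in_seq; lia)).
  rewrite forallb_forall in H. specialize (H _ Hr). simpl in H.
  apply andb_true_iff in H as [H H3]. apply andb_true_iff in H as [H1 H2].
  apply mem_In in H1. apply Nat.ltb_lt in H2. apply Nat.eqb_eq in H3. auto.
Qed.

Lemma recovery_valid j i : 1 <= j <= N -> i < length (chunk_types sc j) ->
  (forall it, In it (recovery sc j i) -> item_valid j it = true) /\ recovers j i = true.
Proof.
  intros Hj Hi. apply andb_true_iff in Hvalid as [_ H].
  rewrite forallb_forall in H. specialize (H j ltac:(apply in_seq; lia)).
  rewrite forallb_forall in H. specialize (H i ltac:(apply in_seq; lia)).
  apply andb_true_iff in H as [H1 H2]. rewrite forallb_forall in H1. auto.
Qed.

Variable w : nat -> nat.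

Definition chunk (m : list nat) (r : nat * nat) : nat :=
  unpack (map w (chunk_types sc (fst r))) (msg (fst r) m) (snd r).
Definition slot_value (m : list nat) (k s : nat) : nat := xorl (map (chunk m) (slot_chunks sc k s)).
Definition xor_enc (k : nat) (m : list nat) : nat :=
  pack (map w (slot_types sc k)) (slot_value m k).
Definition item_value (L m : list nat) (it : item) : nat :=
  match it with
  | Slot k s => unpack (map w (slot_types sc k)) (nth (pred k) L 0) s
  | Side j i => chunk m (j, i)
  end.
Definition xor_dec (j : nat) (L m : list nat) : nat :=
  pack (map w (chunk_types sc j)) (fun i => xorl (map (item_value L m) (recovery sc j i))).

Lemma nth_map_lt (f : nat -> nat) l s : s < length l -> nth s (map f l) 0 = f (nth s l 0).
Proof. intros Hs. rewrite nth_indep with (d' := f 0) by now rewrite length_map. apply map_nth. Qed.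

Lemma slot_value_lt m k s : 1 <= k <= K -> s < length (slot_types sc k) ->
  slot_value m k s < 2 ^ nth s (map w (slot_types sc k)) 0.
Proof.
  intros Hk Hs. rewrite nth_map_lt by auto. apply xorl_lt_pow2.
  intros x Hx. apply in_map_iff in Hx as [[j i] [<- Hr]].
  destruct (slot_chunk_valid k s j i) as [_ [Hi Ht]]; auto.
  rewrite <- Ht, <- nth_map_lt by auto. apply unpack_lt. now rewrite length_map.
Qed.

Lemma xor_enc_lt k m : 1 <= k <= K -> xor_enc k m < 2 ^ list_sum (map w (slot_types sc k)).
Proof.
  intros Hk. apply pack_lt. intros s Hs. rewrite length_map in Hs. now apply slot_value_lt.
Qed.

Lemma xor_enc_dep k m m' : 1 <= k <= K -> agree_on (S k) m m' -> xor_enc k m = xor_enc k m'.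
Proof.
  intros Hk Ha. apply pack_ext. intros s Hs. rewrite length_map in Hs. unfold slot_value.
  f_equal. apply map_ext_in. intros [j i] Hr. unfold chunk; simpl.
  assert (Hj : In j (S k)) by (apply (slot_chunk_valid k s j i); auto).
  now rewrite (Ha j Hj).
Qed.

Lemma xor_dec_dep j L m m' : 1 <= j <= N -> agree_on (A j) m m' -> xor_dec j L m = xor_dec j L m'.
Proof.
  intros Hj Ha. apply pack_ext. intros i Hi. rewrite length_map in Hi. f_equal.
  apply map_ext_in. intros it Hit. destruct (recovery_valid j i) as [Hit' _]; auto.
  specialize (Hit' it Hit). destruct it as [k s|j' i']; simpl in *; auto.
  unfold chunk; simpl. apply mem_In in Hit'. now rewrite (Ha j' Hit').
Qed.

Lemma xor_dec_correct j L m : 1 <= j <= N ->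
  (forall k, 1 <= k <= K -> nth (pred k) L 0 = xor_enc k m) ->
  msg j m < 2 ^ list_sum (map w (chunk_types sc j)) ->
  xor_dec j L m = msg j m.
Proof.
  intros Hj HL Hm. unfold xor_dec. rewrite <- (pack_unpack _ (msg j m) Hm).
  apply pack_ext. intros i Hi. rewrite length_map in Hi.
  destruct (recovery_valid j i Hj Hi) as [Hitems Hrec].
  change (unpack (map w (chunk_types sc j)) (msg j m) i) with (chunk m (j, i)).
  transitivity (xorl (map (fun it => xorl (map (chunk m) (expand sc it))) (recovery sc j i))).
  - f_equal. apply map_ext_in. intros it Hit. specialize (Hitems it Hit).
    destruct it as [k s|j' i']; simpl.
    + apply andb_true_iff in Hitems as [Hk Hs]. apply andb_true_iff in Hk as [Hk1 Hk2].
      apply Nat.leb_le in Hk1, Hk2. apply Nat.ltb_lt in Hs.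
      rewrite HL by lia. unfold xor_enc. rewrite unpack_pack; auto.
      * intros s' Hs'. rewrite length_map in Hs'. apply slot_value_lt; auto; lia.
      * now rewrite length_map.
    + now rewrite Nat.lxor_0_r.
  - rewrite xorl_flat_map. unfold recovers in Hrec. apply andb_true_iff in Hrec as [Hodd Hcancel].
    apply (xorl_odd_occurrence _ chunk_eq_dec); auto.
    intros r Hr Hne. rewrite forallb_forall in Hcancel.
    specialize (Hcancel r (proj2 (nodup_In _ _ _) Hr)).
    destruct (chunk_eq_dec r (j, i)); [contradiction | exact Hcancel].
Qed.
End XorScheme.

Section XorAchievability.
Variables (N K : nat) (S A : nat -> list nat) (C : nat -> R) (sc : xor_scheme).
Hypothesis Hvalid : xor_scheme_valid N K S A sc = true.
(* [mu t] is the fraction of the block length given to chunks and slots of type [t]. *)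
Variable mu : nat -> R.
Hypothesis Hmu : forall t, (0 <= mu t)%R.
Hypothesis Hload : forall k, 1 <= k <= K -> (sum_over mu (slot_types sc k) <= C k)%R.

Definition widths (n t : nat) : nat := floor_nat (INR n * mu t).

Lemma slot_bits_le n k : 1 <= k <= K ->
  list_sum (map (widths n) (slot_types sc k)) <= floor_nat (INR n * C k).
Proof.
  intros Hk. apply le_floor_nat.
  destruct (sum_floor_bounds (INR n) mu (slot_types sc k)) as [_ H]; [apply pos_INR | auto |].
  pose proof (Hload k Hk). pose proof (pos_INR n).
  unfold widths. apply (Rle_trans _ _ _ H). now apply Rmult_le_compat_l.
Qed.

Definition xor_code (Rt : nat -> R) (n : nat) : code N K S A C Rt n.
Proof.
  refine {| enc := xor_enc sc (widths n); dec := xor_dec sc (widths n) |}.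
  - intros k m m' Hk _ _ Ha. now apply (xor_enc_dep N K S A sc Hvalid).
  - intros k m Hk _. apply (Nat.lt_le_trans _ _ _ (xor_enc_lt N K S A sc Hvalid _ k m Hk)).
    apply Nat.pow_le_mono_r; [lia|]. now apply slot_bits_le.
  - intros j L m m' Hj _ _ Ha. now apply (xor_dec_dep N K S A sc Hvalid).
Defined.

Lemma rate_bits_le_chunk_bits n j (r eps : R) : (0 <= r)%R ->
  (r + eps <= sum_over mu (chunk_types sc j))%R ->
  (INR (length (chunk_types sc j)) <= INR n * eps)%R ->
  floor_nat (INR n * r) <= list_sum (map (widths n) (chunk_types sc j)).
Proof.
  intros Hr Hgap Hn. apply INR_le.
  destruct (sum_floor_bounds (INR n) mu (chunk_types sc j)) as [Hlow _]; [apply pos_INR | auto |].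
  destruct (floor_nat_spec (INR n * r)) as [_ Hup]; [apply Rmult_le_pos; auto; apply pos_INR|].
  assert (INR n * (r + eps) <= INR n * sum_over mu (chunk_types sc j))%R
    by (apply Rmult_le_compat_l; [apply pos_INR | lra]).
  unfold widths. lra.
Qed.

Theorem xor_scheme_achievable (Rt : nat -> R) (eps : R) : (0 < eps)%R ->
  (forall j, 1 <= j <= N ->
     (0 <= Rt j)%R /\ (Rt j = 0%R \/ (Rt j + eps <= sum_over mu (chunk_types sc j))%R)) ->
  achievable N K S A C Rt.
Proof.
  intros Heps HRt. split; [intros j Hj; apply HRt, Hj|].
  exists (xor_code Rt).
  set (B := list_max (map (fun j => length (chunk_types sc j)) (seq 1 N))).
  destruct (INR_archimed eps (INR B) Heps) as [n0 Hn0].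
  intros e He. exists n0. intros n Hn. unfold R_dist.
  enough (Hz : err_prob (xor_code Rt n) = 0%R) by (rewrite Hz, Rminus_0_r, Rabs_R0; lra).
  apply err_prob_zero. intros m [_ Hv]. apply err_event_false. intros j Hj.
  apply (xor_dec_correct N K S A sc Hvalid); auto.
  { intros k Hk. apply (nth_sent (xor_code Rt n) k m Hk). }
  apply (Nat.lt_le_trans _ _ _ (Hv j Hj)).
  rewrite msize_floor_nat. apply Nat.pow_le_mono_r; [lia|].
  destruct (HRt j Hj) as [HRt0 [->|Hgap]].
  - rewrite Rmult_0_r, floor_nat_0. lia.
  - apply (rate_bits_le_chunk_bits n j (Rt j) eps); auto.
    assert (HB : length (chunk_types sc j) <= B).
    { apply (proj1 (Forall_forall _ _) (proj1 (list_max_le _ B) (le_n B))).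
      apply (in_map (fun j => length (chunk_types sc j))), in_seq. lia. }
    apply le_INR in HB. assert (INR n0 <= INR n)%R by (apply le_INR; lia).
    assert (INR n0 * eps <= INR n * eps)%R by (apply Rmult_le_compat_r; lra).
    lra.
Qed.
End XorAchievability.

(** * The instance *)

Definition ex_chunk_types (j : nat) : list nat :=
  match j with
  | 1 => [2; 3; 4; 5; 6; 6; 7; 7; 7; 8; 8; 8]
  | 2 => [0; 0; 1; 1; 1; 2; 3; 4; 5; 5; 6; 7; 7; 8; 8; 8]
  | 3 => [0; 0; 1; 1; 2; 3; 4; 4; 5; 5; 6; 7; 7; 7; 8; 8; 8]
  | 4 => [2; 3; 3; 5; 6; 7; 7; 8; 8; 8]
  | 5 => [0; 2; 4; 7]
  | _ => []
  end.

Definition ex_slot_types : list nat := [0; 1; 2; 3; 4; 5; 6; 7; 7; 8; 8].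

Definition ex_slot_chunks (k : nat) : list (list (nat * nat)) :=
  match k with
  | 1 => [[(2, 0); (3, 0)]; [(2, 3); (3, 2)]; [(1, 0); (2, 5); (3, 4)];
         [(1, 1); (2, 6); (3, 5)]; [(1, 2); (3, 7)]; [(1, 3); (2, 9); (3, 8)]; [(1, 5)];
         [(1, 6); (1, 7); (2, 11); (3, 12)]; [(1, 7); (2, 11); (3, 11)];
         [(1, 10); (2, 14); (3, 14); (3, 16)]; [(1, 9); (2, 15); (3, 15)]]
  | 2 => [[(2, 1); (3, 1)]; [(2, 2); (3, 3)]; [(2, 5); (3, 4); (4, 0)]; [(4, 2)];
         [(2, 7); (3, 6)]; [(2, 8); (3, 9)]; [(2, 10); (3, 10); (4, 4)];
         [(2, 11); (2, 12); (3, 13); (4, 5)]; [(2, 11); (3, 11); (4, 6)];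
         [(2, 13); (2, 14); (2, 15); (3, 15); (3, 16); (4, 7); (4, 8)];
         [(2, 14); (2, 15); (3, 14); (3, 15); (3, 16); (4, 7)]]
  | 3 => [[(5, 0)]; [(2, 4)]; [(5, 1)]; [(1, 1); (4, 1)]; [(1, 2); (5, 2)]; [(1, 3); (4, 3)];
         [(1, 4); (4, 4)]; [(1, 6); (1, 8); (4, 5)]; [(1, 6); (5, 3)]; [(1, 9); (4, 9)];
         [(1, 11); (4, 8)]]
  | _ => []
  end.

Definition ex_recovery (j : nat) : list (list item) :=
  match j with
  | 1 => [[Slot 1 2; Slot 2 2; Side 4 0]; [Slot 3 3; Side 4 1]; [Slot 3 4; Side 5 2];
         [Slot 3 5; Side 4 3]; [Slot 3 6; Side 4 4]; [Slot 1 6]; [Slot 3 8; Side 5 3];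
         [Slot 1 8; Slot 2 8; Side 4 6]; [Slot 3 7; Slot 3 8; Side 4 5; Side 5 3];
         [Slot 3 9; Side 4 9]; [Slot 1 9; Slot 1 10; Slot 2 10; Slot 3 9; Side 4 7; Side 4 9];
         [Slot 3 10; Side 4 8]]
  | 2 => [[Slot 1 0; Side 3 0]; [Slot 2 0; Side 3 1]; [Slot 2 1; Side 3 3];
         [Slot 1 1; Side 3 2]; [Slot 3 1]; [Slot 1 2; Side 1 0; Side 3 4];
         [Slot 1 3; Side 1 1; Side 3 5]; [Slot 2 4; Side 3 6]; [Slot 2 5; Side 3 9];
         [Slot 1 5; Side 1 3; Side 3 8]; [Slot 2 6; Slot 3 6; Side 1 4; Side 3 10];
         [Slot 1 8; Side 1 7; Side 3 11];
         [Slot 1 8; Slot 2 7; Slot 3 7; Side 1 6; Side 1 7; Side 1 8; Side 3 11; Side 3 13];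
         [Slot 2 9; Slot 2 10; Slot 3 10; Side 1 11; Side 3 14];
         [Slot 1 9; Side 1 10; Side 3 14; Side 3 16]; [Slot 1 10; Side 1 9; Side 3 15]]
  | 3 => [[Slot 1 0; Side 2 0]; [Slot 2 0; Side 2 1]; [Slot 1 1; Side 2 3];
         [Slot 2 1; Side 2 2]; [Slot 1 2; Side 1 0; Side 2 5]; [Slot 1 3; Side 1 1; Side 2 6];
         [Slot 2 4; Side 2 7]; [Slot 1 4; Side 1 2]; [Slot 1 5; Side 1 3; Side 2 9];
         [Slot 2 5; Side 2 8]; [Slot 2 6; Slot 3 6; Side 1 4; Side 2 10];
         [Slot 1 8; Side 1 7; Side 2 11]; [Slot 1 7; Side 1 6; Side 1 7; Side 2 11];
         [Slot 2 7; Slot 3 7; Side 1 6; Side 1 8; Side 2 11; Side 2 12];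
         [Slot 2 9; Slot 2 10; Slot 3 10; Side 1 11; Side 2 13];
         [Slot 1 10; Side 1 9; Side 2 15];
         [Slot 1 9; Slot 2 9; Slot 2 10; Slot 3 10; Side 1 10; Side 1 11; Side 2 13; Side 2 14]]
  | 4 => [[Slot 2 2; Side 2 5; Side 3 4]; [Slot 1 3; Slot 3 3; Side 2 6; Side 3 5]; [Slot 2 3];
         [Slot 1 5; Slot 3 5; Side 2 9; Side 3 8]; [Slot 2 6; Side 2 10; Side 3 10];
         [Slot 2 7; Side 2 11; Side 2 12; Side 3 13]; [Slot 2 8; Side 2 11; Side 3 11];
         [Slot 2 10; Side 2 14; Side 2 15; Side 3 14; Side 3 15; Side 3 16];
         [Slot 2 9; Slot 2 10; Side 2 13; Side 3 14];
         [Slot 1 10; Slot 3 9; Side 2 15; Side 3 15]]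
  | 5 => [[Slot 3 0]; [Slot 3 2]; [Slot 1 4; Slot 3 4; Side 3 7];
         [Slot 1 7; Slot 1 8; Slot 3 8; Side 3 11; Side 3 12]]
  | _ => []
  end.

Definition ex_scheme : xor_scheme := {|
  chunk_types := ex_chunk_types;
  slot_types := fun _ => ex_slot_types;
  slot_chunks := fun k s => nth s (ex_slot_chunks k) [];
  recovery := fun j i => nth i (ex_recovery j) [] |}.

Lemma ex_scheme_valid : xor_scheme_valid 5 3 S_ex A_ex ex_scheme = true.
Proof. vm_compute. reflexivity. Qed.

Open Scope R_scope.

Definition ex_polytope (Rt : nat -> R) : Prop :=
  0 <= Rt 1%nat /\ 0 <= Rt 2%nat /\ 0 <= Rt 3%nat /\ 0 <= Rt 4%nat /\
  0 <= Rt 5%nat /\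
  Rt 3%nat <= 2 /\ Rt 5%nat <= 1 /\
  Rt 1%nat + Rt 3%nat <= 3 /\ Rt 1%nat + Rt 5%nat <= 2 /\
  Rt 4%nat + Rt 5%nat <= 2 /\
  Rt 1%nat + Rt 2%nat + Rt 5%nat <= 3 /\
  Rt 1%nat + Rt 4%nat + Rt 5%nat <= 3 /\
  Rt 2%nat + Rt 4%nat + Rt 5%nat <= 3 /\
  Rt 3%nat + Rt 4%nat + Rt 5%nat <= 3.

(* [D] lists the messages in an order in which they can be decoded. *)
Ltac cut_set D :=
  match goal with Hc : capacity_region 5 3 S_ex A_ex C_ex ?Rt |- _ =>
    let H := fresh "Hcut" in
    pose proof (sum_rates_le_of_decodable_in_order 5 3 S_ex A_ex C_ex D
      ltac:(repeat constructor; cbn; intuition lia)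
      ltac:(intros x Hx; apply in_seq; cbn in Hx; intuition lia)
      eq_refl ltac:(intros; unfold C_ex; lra) Rt Hc) as H;
    cbn in H; unfold C_ex in H
  end.

Lemma ex_polytope_of_capacity Rt : capacity_region 5 3 S_ex A_ex C_ex Rt -> ex_polytope Rt.
Proof.
  intros Hc.
  cut_set [3%nat]. cut_set [5%nat]. cut_set [1; 3]%nat. cut_set [5; 1]%nat. cut_set [5; 4]%nat.
  cut_set [5; 1; 2]%nat. cut_set [5; 4; 1]%nat. cut_set [5; 2; 4]%nat. cut_set [3; 5; 4]%nat.
  pose proof (capacity_region_nonneg _ _ _ _ _ _ Hc) as Hnn.
  unfold ex_polytope. repeat split; try lra; apply Hnn; lia.
Qed.

Lemma argmax_list (l : list R) : l <> [] -> exists m, In m l /\ Forall (fun x => x <= m) l.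
Proof.
  induction l as [|a l IH]; intros H; [congruence|].
  destruct l as [|b l].
  - exists a. split; [now left | constructor; [lra | constructor]].
  - destruct (IH ltac:(discriminate)) as [m [Hm Hf]].
    destruct (Rle_dec a m) as [Ha|Ha].
    + exists m. split; [now right | now constructor].
    + exists a. split; [now left | constructor; [lra|]].
      eapply Forall_impl; [|exact Hf]. intros x Hx. lra.
Qed.

Ltac unpack_Forall H :=
  match type of H with
  | Forall _ (_ :: _) =>
      let H1 := fresh "Hmax" in
      pose proof (Forall_inv H) as H1; cbv beta in H1; apply Forall_inv_tail in H; unpack_Forall H
  | _ => clear H
  end.

(* One subgoal per entry of [l], in order, each knowing that its entry is the largest. *)
Tactic Notation "cases_on_max" constr(l) :=
  let m := fresh "m" in let Hin := fresh "Hin" in let Hall := fresh "Hall" in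
  destruct (argmax_list l) as [m [Hin Hall]]; [discriminate|]; unpack_Forall Hall;
  repeat (destruct Hin as [<-|Hin]); [..| destruct Hin].

Ltac split_lra := repeat split; lra.

(* The coefficients of [l_t] form the rate vector of basic scheme [t].  Each branch of the
   case analysis is a cell of the polytope on which the shares are affine in the rates. *)
Lemma ex_time_sharing (x1 x2 x3 x4 x5 : R) :
  0 <= x1 -> 0 <= x2 -> 0 <= x3 -> 0 <= x4 -> 0 <= x5 ->
  x3 <= 2 -> x5 <= 1 -> x1 + x3 <= 3 -> x1 + x5 <= 2 -> x4 + x5 <= 2 ->
  x1 + x2 + x5 <= 3 -> x1 + x4 + x5 <= 3 -> x2 + x4 + x5 <= 3 -> x3 + x4 + x5 <= 3 ->
  exists l0 l1 l2 l3 l4 l5 l6 l7 l8 : R,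
    0 <= l0 /\ 0 <= l1 /\ 0 <= l2 /\ 0 <= l3 /\ 0 <= l4 /\
    0 <= l5 /\ 0 <= l6 /\ 0 <= l7 /\ 0 <= l8 /\
    l0 + l1 + l2 + l3 + l4 + l5 + l6 + l7 + l8 <= 1 /\
    x1 <= l2 + l3 + l4 + l5 + 2 * l6 + 3/2 * l7 + 3/2 * l8 /\
    x2 <= 2 * l0 + 3 * l1 + l2 + l3 + l4 + 2 * l5 + l6 + l7 + 3/2 * l8 /\
    x3 <= 2 * l0 + 2 * l1 + l2 + l3 + 2 * l4 + 2 * l5 + l6 + 3/2 * l7 + 3/2 * l8 /\
    x4 <= l2 + 2 * l3 + l5 + l6 + l7 + 3/2 * l8 /\
    x5 <= l0 + l2 + l4 + 1/2 * l7.
Proof.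
  intros.
  cases_on_max [1/2 * x3; x5; 1/3 * x1 + 1/3 * x3; 1/2 * x1 + 1/2 * x5; 1/2 * x4 + 1/2 * x5;
      1/3 * x1 + 1/3 * x2 + 1/3 * x5; 1/3 * x1 + 1/3 * x4 + 1/3 * x5;
      1/3 * x2 + 1/3 * x4 + 1/3 * x5; 1/3 * x3 + 1/3 * x4 + 1/3 * x5].
  { cases_on_max [- 1/2 * x2 + 1/2 * x3; 1/2 * x3 - x5; x1].
    { exists (1/2 * x2), 0, 0, 0, (- 1/2 * x2 + 1/2 * x3 - x4), x4, 0, 0, 0; split_lra. }
    { cases_on_max [- 1/3 * x2 + 1/2 * x3 - 1/3 * x5; x1; x4].
      { exists x5, (1/3 * x2 - 2/3 * x5), 0, 0, (- 1/3 * x2 + 1/2 * x3 - x4 - 1/3 * x5), x4, 0, 0,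
          0; split_lra. }
      { exists x5, (- x1 + 1/2 * x3 - x5), 0, 0, 0, x1, 0, 0, 0; split_lra. }
      { exists x5, (1/2 * x3 - x4 - x5), 0, 0, 0, x4, 0, 0, 0; split_lra. } }
    { exists (- x1 + 1/2 * x3), 0, 0, 0, (x1 - 1/2 * x3 + x5), (1/2 * x3 - x5), 0, 0,
        0; split_lra. } }
  { cases_on_max [- 1/2 * x2 + x5; - 1/2 * x3 + x5; x1; x4].
    { exists (1/2 * x2), 0, x4, 0, (- 1/2 * x2 - x4 + x5), 0, 0, 0, 0; split_lra. }
    { cases_on_max [x1; x4; 1/2 * x1 + 1/2 * x2 - 1/2 * x3; 1/2 * x2 - 1/2 * x3 + 1/2 * x4].
      { exists (- x1 + x5), 0, x1, 0, 0, 0, 0, 0, 0; split_lra. }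
      { exists (- x4 + x5), 0, x4, 0, 0, 0, 0, 0, 0; split_lra. }
      { exists (- x1 + x5), 0, x1, 0, 0, 0, 0, 0, 0; split_lra. }
      { exists (- x4 + x5), 0, x4, 0, 0, 0, 0, 0, 0; split_lra. } }
    { exists (- x1 + x5), 0, x4, 0, (x1 - x4), 0, 0, 0, 0; split_lra. }
    { exists (- x4 + x5), 0, x4, 0, 0, 0, 0, 0, 0; split_lra. } }
  { cases_on_max [1/3 * x1 - x2 + 1/3 * x3; 1/3 * x1 + 1/3 * x3 - x5;
        1/3 * x1 - 2/3 * x3 + x4 + x5].
    { cases_on_max [2/3 * x1 - x2 - 1/3 * x3 + x5;
          1/3 * x1 - 1/2 * x2 - 1/6 * x3 + 1/2 * x4 + 1/2 * x5;
          - 2/3 * x1 - x2 + 1/3 * x3 + x4 + x5].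
      { cases_on_max [2/3 * x1 - 1/3 * x3; x4].
        { exists 0, 0, 0, 0, (- 1/3 * x1 + 2/3 * x3), 0, (2/3 * x1 - 1/3 * x3), 0, 0; split_lra. }
        { exists 0, 0, 0, 0, (1/3 * x1 + 1/3 * x3 - x4), 0, (4/3 * x1 - 2/3 * x3 - x4),
            (- 4/3 * x1 + 2/3 * x3 + 2 * x4), 0; split_lra. } }
      { exists 0, 0, 0, 0, (1/2 * x2 + 1/2 * x3 - 1/2 * x4 - 1/2 * x5), 0,
          (x1 + 1/2 * x2 - 1/2 * x3 - 1/2 * x4 - 1/2 * x5), (- 2 * x2 + 2 * x5),
          (- 2/3 * x1 + x2 + 1/3 * x3 + x4 - x5); split_lra. }
      { cases_on_max [- 2/3 * x1 + 1/3 * x3 + x4; 4/3 * x1 - 2/3 * x3].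
        { exists 0, 0, 0, 0, (x1 - x4), (- 2 * x1 + x3 + x4), 0, 0,
            (4/3 * x1 - 2/3 * x3); split_lra. }
        { exists 0, 0, 0, 0, (- x1 + x3), 0, 0, (4 * x1 - 2 * x3 - 2 * x4),
            (- 8/3 * x1 + 4/3 * x3 + 2 * x4); split_lra. } } }
    { cases_on_max [1/3 * x1 - 1/2 * x2 + 1/3 * x3 - 1/2 * x5; 1/3 * x1 + 1/3 * x3 - x4 - x5;
          2/3 * x1 - 1/3 * x3; 1/3 * x1 - 2/3 * x3 + x4 + x5].
      { cases_on_max [2/3 * x1 - 1/3 * x3; 1/3 * x1 - 1/4 * x2 - 1/6 * x3 + 1/2 * x4 + 1/4 * x5;
            - 2/3 * x1 - 1/2 * x2 + 1/3 * x3 + x4 + 1/2 * x5].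
        { exists 0, 0, 0, 0, (- 1/3 * x1 - 1/2 * x2 + 2/3 * x3 + 1/2 * x5), (1/2 * x2 - 1/2 * x5),
            (2/3 * x1 - 1/3 * x3), 0, 0; split_lra. }
        { exists 0, 0, 0, 0, (- 1/4 * x2 + 1/2 * x3 - 1/2 * x4 + 1/4 * x5), (1/2 * x2 - 1/2 * x5),
            (x1 + 1/4 * x2 - 1/2 * x3 - 1/2 * x4 - 1/4 * x5), 0,
            (- 2/3 * x1 - 1/2 * x2 + 1/3 * x3 + x4 + 1/2 * x5); split_lra. }
        { exists 0, 0, 0, 0, (x1 - x4), (- 2 * x1 + x3 + x4), 0, 0,
            (4/3 * x1 - 2/3 * x3); split_lra. } }
      { exists 0, 0, 0, 0, x5, (- 1/3 * x1 + 2/3 * x3 - x5), (2/3 * x1 - 1/3 * x3), 0,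
          0; split_lra. }
      { exists 0, 0, 0, 0, x5, (- 1/3 * x1 + 2/3 * x3 - x5), (2/3 * x1 - 1/3 * x3), 0,
          0; split_lra. }
      { exists 0, 0, 0, 0, x5, (x3 - x4 - 2 * x5), (x1 - x4 - x5), 0,
          (- 2/3 * x1 - 2/3 * x3 + 2 * x4 + 2 * x5); split_lra. } }
    { exists 0, 0, 0, 0, (x3 - x4 - x5), 0, (x1 - x4 - x5), (- 2 * x3 + 2 * x4 + 4 * x5),
        (- 2/3 * x1 + 4/3 * x3 - 2 * x5); split_lra. } }
  { cases_on_max [1/2 * x1 - x2 + 1/2 * x5; 1/2 * x1 - x3 + 1/2 * x5; 1/2 * x1 - x4 + 1/2 * x5;
        1/2 * x1 - 1/2 * x5; x3 - x5].
    { cases_on_max [1/2 * x1 - 1/2 * x5; 1/4 * x1 - 1/2 * x2 + 1/2 * x3 - 1/4 * x5; - x2 + x4;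
          - 1/4 * x1 - x2 + 1/2 * x3 + 1/2 * x4 + 1/4 * x5].
      { exists 0, 0, x5, 0, 0, 0, (1/2 * x1 - 1/2 * x5), 0, 0; split_lra. }
      { cases_on_max [1/2 * x1 - 1/2 * x5; - x2 + x4].
        { exists 0, 0, (1/4 * x1 + 1/2 * x2 - 1/2 * x3 + 3/4 * x5), 0,
            (- 1/4 * x1 - 1/2 * x2 + 1/2 * x3 + 1/4 * x5), 0, (1/2 * x1 - 1/2 * x5), 0,
            0; split_lra. }
        { exists 0, 0, (1/4 * x1 + 1/2 * x2 - 1/2 * x3 + 3/4 * x5), 0,
            (1/4 * x1 + 1/2 * x2 + 1/2 * x3 - x4 - 1/4 * x5), 0, (x1 + x2 - x4 - x5),
            (- x1 - 2 * x2 + 2 * x4 + x5), 0; split_lra. } }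
      { cases_on_max [1/2 * x1 - 1/2 * x5; 1/4 * x1 - 1/2 * x2 + 1/2 * x3 - 1/4 * x5;
            - 1/2 * x1 - x2 + x3 + 1/2 * x5].
        { exists 0, 0, x5, 0, 0, 0, (1/2 * x1 - 1/2 * x5), 0, 0; split_lra. }
        { exists 0, 0, (1/4 * x1 + 1/2 * x2 - 1/2 * x3 + 3/4 * x5), 0, 0, 0,
            (3/4 * x1 + 1/2 * x2 - 1/2 * x3 - 3/4 * x5), (- 1/2 * x1 - x2 + x3 + 1/2 * x5),
            0; split_lra. }
        { exists 0, 0, (- 1/2 * x1 + 3/2 * x5), 0, 0, 0, 0, (x1 - x5), 0; split_lra. } }
      { exists 0, 0, (- 1/4 * x1 - 1/2 * x3 + 1/2 * x4 + 5/4 * x5), 0,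
          (- 1/4 * x1 + 1/2 * x3 - 1/2 * x4 + 1/4 * x5), 0, 0, (x1 - x5), 0; split_lra. } }
    { exists 0, 0, x5, 0, 0, 0, (1/2 * x1 - 1/2 * x5), 0, 0; split_lra. }
    { exists 0, 0, x4, 0, (- x4 + x5), 0, (1/2 * x1 - 1/2 * x5), 0, 0; split_lra. }
    { exists 0, 0, x5, 0, 0, 0, (1/2 * x1 - 1/2 * x5), 0, 0; split_lra. }
    { cases_on_max [1/2 * x1 - x2 + 1/2 * x5; 1/2 * x1 - 1/2 * x5; - 1/2 * x1 + x3 + x4 - 3/2 * x5].
      { cases_on_max [1/2 * x1 - 1/2 * x5; - 1/2 * x1 + x3 + x4 - 3/2 * x5].
        { exists 0, 0, (1/2 * x1 - x3 + 3/2 * x5), 0, (- 1/2 * x1 + x3 - 1/2 * x5), 0,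
            (1/2 * x1 - 1/2 * x5), 0, 0; split_lra. }
        { exists 0, 0, (1/2 * x1 - x3 + 3/2 * x5), 0, (1/2 * x1 - x4 + 1/2 * x5), 0,
            (3/2 * x1 - x3 - x4 + 1/2 * x5), (- 2 * x1 + 2 * x3 + 2 * x4 - 2 * x5),
            0; split_lra. } }
      { exists 0, 0, (1/2 * x1 - x3 + 3/2 * x5), 0, (- 1/2 * x1 + x3 - 1/2 * x5), 0,
          (1/2 * x1 - 1/2 * x5), 0, 0; split_lra. }
      { exists 0, 0, (1/2 * x1 - x3 + 3/2 * x5), 0, (1/2 * x1 - x4 + 1/2 * x5), 0,
          (3/2 * x1 - x3 - x4 + 1/2 * x5), (- 2 * x1 + 2 * x3 + 2 * x4 - 2 * x5),
          0; split_lra. } } }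
  { exists 0, 0, x5, (1/2 * x4 - 1/2 * x5), 0, 0, 0, 0, 0; split_lra. }
  { cases_on_max [1/3 * x1 + 1/3 * x2 - 1/2 * x3 + 1/3 * x5; 1/3 * x1 + 1/3 * x2 - 2/3 * x5;
        1/3 * x1 - 2/3 * x2 + x3 - 2/3 * x5; 2/3 * x1 - 1/3 * x2 + 2/3 * x5;
        1/3 * x1 - 1/6 * x2 + 1/2 * x4 + 1/3 * x5].
    { cases_on_max [1/3 * x1 + 1/3 * x2 - 2/3 * x5; 2/3 * x1 - 1/3 * x2 + 2/3 * x5;
          1/3 * x1 - 1/6 * x2 + 1/2 * x4 + 1/3 * x5].
      { cases_on_max [1/2 * x1; 1/3 * x1 + 1/3 * x4].
        { exists x5, (- 1/6 * x1 + 1/3 * x2 - 2/3 * x5), 0, 0, 0, 0, (1/2 * x1), 0, 0; split_lra. }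
        { exists x5, (1/3 * x2 - 1/3 * x4 - 2/3 * x5), 0, 0, 0, 0, (x1 - x4), 0,
            (- 2/3 * x1 + 4/3 * x4); split_lra. } }
      { exists (- 1/3 * x1 + 2/3 * x2 - 1/3 * x5), 0, (1/3 * x1 - 2/3 * x2 + 4/3 * x5), 0, 0, 0,
          (1/3 * x1 + 1/3 * x2 - 2/3 * x5), 0, 0; split_lra. }
      { exists (1/2 * x2 - 1/2 * x4), 0, (- 1/2 * x2 + 1/2 * x4 + x5), 0, 0, 0, (x1 - x4), 0,
          (- 2/3 * x1 + 1/3 * x2 + x4 - 2/3 * x5); split_lra. } }
    { cases_on_max [1/3 * x1 + 1/3 * x2 - 1/2 * x3 + 1/3 * x5; 1/3 * x1 - 2/3 * x2 + x3 - 2/3 * x5;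
          1/2 * x1; 1/3 * x1 + 1/3 * x4].
      { cases_on_max [1/2 * x1; 1/3 * x1 + 1/3 * x4].
        { exists x5, (- 1/6 * x1 + 1/3 * x2 - 2/3 * x5), 0, 0, 0, 0, (1/2 * x1), 0, 0; split_lra. }
        { exists x5, (1/3 * x2 - 1/3 * x4 - 2/3 * x5), 0, 0, 0, 0, (x1 - x4), 0,
            (- 2/3 * x1 + 4/3 * x4); split_lra. } }
      { cases_on_max [1/3 * x1 - 2/3 * x2 + x3 - x4 - 2/3 * x5; 2/3 * x1 + 2/3 * x2 - x3 + 2/3 * x5;
            1/3 * x1 + 4/3 * x2 - 2 * x3 + x4 + 4/3 * x5].
        { exists x5, (x2 - x3), 0, 0, 0, (- 1/3 * x1 - 4/3 * x2 + 2 * x3 - 4/3 * x5),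
            (2/3 * x1 + 2/3 * x2 - x3 + 2/3 * x5), 0, 0; split_lra. }
        { exists x5, (x2 - x3), 0, 0, 0, (- 1/3 * x1 - 4/3 * x2 + 2 * x3 - 4/3 * x5),
            (2/3 * x1 + 2/3 * x2 - x3 + 2/3 * x5), 0, 0; split_lra. }
        { exists x5, (x2 - x3), 0, 0, 0, (- 2 * x2 + 3 * x3 - x4 - 2 * x5), (x1 - x4), 0,
            (- 2/3 * x1 + 4/3 * x2 - 2 * x3 + 2 * x4 + 4/3 * x5); split_lra. } }
      { exists x5, (- 1/6 * x1 + 1/3 * x2 - 2/3 * x5), 0, 0, 0, 0, (1/2 * x1), 0, 0; split_lra. }
      { exists x5, (1/3 * x2 - 1/3 * x4 - 2/3 * x5), 0, 0, 0, 0, (x1 - x4), 0,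
          (- 2/3 * x1 + 4/3 * x4); split_lra. } }
    { cases_on_max [1/3 * x1 + 1/3 * x2 - 2/3 * x5; 1/3 * x1 + 1/3 * x2 - x3 + x4 + 4/3 * x5].
      { cases_on_max [1/3 * x1 + 1/3 * x2 - x4 - 2/3 * x5; 2/3 * x1 + 2/3 * x2 - x3 + 2/3 * x5;
            1/3 * x1 + 1/3 * x2 - x3 + x4 + 4/3 * x5].
        { exists (x2 - x3 + x5), 0, 0, 0, (- x2 + x3), (- 1/3 * x1 - 1/3 * x2 + x3 - 4/3 * x5),
            (2/3 * x1 + 2/3 * x2 - x3 + 2/3 * x5), 0, 0; split_lra. }
        { exists (x2 - x3 + x5), 0, 0, 0, (- x2 + x3), (- 1/3 * x1 - 1/3 * x2 + x3 - 4/3 * x5),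
            (2/3 * x1 + 2/3 * x2 - x3 + 2/3 * x5), 0, 0; split_lra. }
        { exists (x2 - x3 + x5), 0, 0, 0, (- x2 + x3), (x3 - x4 - 2 * x5), (x1 + x2 - x3 - x4), 0,
            (- 2/3 * x1 - 2/3 * x2 + 2 * x4 + 4/3 * x5); split_lra. } }
      { exists (x2 - x3 + x5), 0, 0, 0, (- x2 + 2 * x3 - x4 - 2 * x5), 0, (x1 + x2 - x3 - x4),
          (- 2 * x3 + 2 * x4 + 4 * x5), (- 2/3 * x1 - 2/3 * x2 + 2 * x3 - 8/3 * x5); split_lra. } }
    { cases_on_max [x2 - x3; 2/3 * x1 - 1/3 * x2 - x4 + 2/3 * x5; 1/3 * x1 + 1/3 * x2 - 2/3 * x5;
          1/3 * x1 - 2/3 * x2 + x3 - 2/3 * x5].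
      { exists (- 1/3 * x1 + 2/3 * x2 - 1/3 * x5), 0, (1/3 * x1 - 2/3 * x2 + 4/3 * x5), 0, 0, 0,
          (1/3 * x1 + 1/3 * x2 - 2/3 * x5), 0, 0; split_lra. }
      { exists (- 1/3 * x1 + 2/3 * x2 - 1/3 * x5), 0, x4, 0, (1/3 * x1 - 2/3 * x2 - x4 + 4/3 * x5),
          0, (1/3 * x1 + 1/3 * x2 - 2/3 * x5), 0, 0; split_lra. }
      { exists (- 1/3 * x1 + 2/3 * x2 - 1/3 * x5), 0, (1/3 * x1 - 2/3 * x2 + 4/3 * x5), 0, 0, 0,
          (1/3 * x1 + 1/3 * x2 - 2/3 * x5), 0, 0; split_lra. }
      { cases_on_max [1/3 * x1 + 1/3 * x2 - 2/3 * x5; - 1/3 * x1 - 1/3 * x2 + x3 + x4 - 4/3 * x5].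
        { exists (- 1/3 * x1 + 2/3 * x2 - 1/3 * x5), 0, (1/3 * x1 + 1/3 * x2 - x3 + 4/3 * x5), 0,
            (- x2 + x3), 0, (1/3 * x1 + 1/3 * x2 - 2/3 * x5), 0, 0; split_lra. }
        { exists (- 1/3 * x1 + 2/3 * x2 - 1/3 * x5), 0, (1/3 * x1 + 1/3 * x2 - x3 + 4/3 * x5), 0,
            (2/3 * x1 - 1/3 * x2 - x4 + 2/3 * x5), 0, (x1 + x2 - x3 - x4),
            (- 4/3 * x1 - 4/3 * x2 + 2 * x3 + 2 * x4 - 4/3 * x5), 0; split_lra. } } }
    { cases_on_max [1/3 * x1 + 5/6 * x2 - x3 - 1/2 * x4 + 1/3 * x5; 1/3 * x1 + 1/3 * x2 - 2/3 * x5;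
          1/3 * x1 - 2/3 * x2 + x3 - 2/3 * x5].
      { exists (1/2 * x2 - 1/2 * x4), 0, (- 1/2 * x2 + 1/2 * x4 + x5), 0, 0, 0, (x1 - x4), 0,
          (- 2/3 * x1 + 1/3 * x2 + x4 - 2/3 * x5); split_lra. }
      { exists (1/2 * x2 - 1/2 * x4), 0, (- 1/2 * x2 + 1/2 * x4 + x5), 0, 0, 0, (x1 - x4), 0,
          (- 2/3 * x1 + 1/3 * x2 + x4 - 2/3 * x5); split_lra. }
      { exists (1/2 * x2 - 1/2 * x4), 0, (1/2 * x2 - x3 + 1/2 * x4 + x5), 0, 0, 0,
          (x1 + x2 - x3 - x4), (- 2 * x2 + 2 * x3),
          (- 2/3 * x1 + 1/3 * x2 + x4 - 2/3 * x5); split_lra. } } }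
  { cases_on_max [1/3 * x1 - x2 + 1/3 * x4 + 1/3 * x5; 1/3 * x1 - x3 + 1/3 * x4 + 1/3 * x5;
        1/3 * x1 + 1/3 * x4 - 2/3 * x5; 1/3 * x1 + x3 - 2/3 * x4 - 2/3 * x5].
    { cases_on_max [1/3 * x1 + 1/3 * x4 - 2/3 * x5;
          1/3 * x1 - 1/2 * x2 + 1/2 * x3 - 1/6 * x4 - 1/6 * x5;
          - 2/3 * x1 - x2 + x3 + 1/3 * x4 + 1/3 * x5].
      { cases_on_max [1/3 * x1 - 1/2 * x2 + 1/2 * x3 - 1/6 * x4 - 1/6 * x5;
            2/3 * x1 - 1/3 * x4 - 1/3 * x5; - 2/3 * x1 - x2 + x3 + 1/3 * x4 + 1/3 * x5].
        { exists 0, 0, x5, (1/2 * x2 - 1/2 * x3 + 1/2 * x4 - 1/2 * x5), 0, 0,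
            (x1 + 1/2 * x2 - 1/2 * x3 - 1/2 * x4 - 1/2 * x5), 0,
            (- 2/3 * x1 - x2 + x3 + 1/3 * x4 + 1/3 * x5); split_lra. }
        { exists 0, 0, x5, (- 1/3 * x1 + 2/3 * x4 - 1/3 * x5), 0, 0,
            (2/3 * x1 - 1/3 * x4 - 1/3 * x5), 0, 0; split_lra. }
        { exists 0, 0, x5, (- x1 + x4), 0, 0, 0, 0, (4/3 * x1 - 2/3 * x4 - 2/3 * x5); split_lra. } }
      { exists 0, 0, (1/2 * x2 - 1/2 * x3 + 1/2 * x4 + 1/2 * x5), 0, 0, 0,
          (x1 + 1/2 * x2 - 1/2 * x3 - 1/2 * x4 - 1/2 * x5), (- x2 + x3 - x4 + x5),
          (- 2/3 * x1 + 4/3 * x4 - 2/3 * x5); split_lra. }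
      { cases_on_max [1/3 * x1 + 1/3 * x4 - 2/3 * x5; 4/3 * x1 - 2/3 * x4 - 2/3 * x5].
        { exists 0, 0, x5, (- x1 + x4), 0, 0, 0, 0, (4/3 * x1 - 2/3 * x4 - 2/3 * x5); split_lra. }
        { exists 0, 0, (- x1 + x4 + x5), 0, 0, 0, 0, (2 * x1 - 2 * x4),
            (- 2/3 * x1 + 4/3 * x4 - 2/3 * x5); split_lra. } } }
    { cases_on_max [1/3 * x1 + 1/3 * x4 - 2/3 * x5; 1/3 * x1 + x2 - x3 - 2/3 * x4 + 1/3 * x5;
          - 2/3 * x1 + x2 - x3 + 1/3 * x4 + 1/3 * x5].
      { cases_on_max [2/3 * x1 - 1/3 * x4 - 1/3 * x5;
            1/3 * x1 + 1/2 * x2 - 1/2 * x3 - 1/6 * x4 - 1/6 * x5;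
            - 2/3 * x1 + x2 - x3 + 1/3 * x4 + 1/3 * x5].
        { exists 0, 0, x5, (- 1/3 * x1 + 2/3 * x4 - 1/3 * x5), 0, 0,
            (2/3 * x1 - 1/3 * x4 - 1/3 * x5), 0, 0; split_lra. }
        { exists 0, 0, x5, (- 1/2 * x2 + 1/2 * x3 + 1/2 * x4 - 1/2 * x5), 0, 0,
            (x1 - 1/2 * x2 + 1/2 * x3 - 1/2 * x4 - 1/2 * x5), 0,
            (- 2/3 * x1 + x2 - x3 + 1/3 * x4 + 1/3 * x5); split_lra. }
        { exists 0, 0, x5, (- x1 + x4), 0, 0, 0, 0, (4/3 * x1 - 2/3 * x4 - 2/3 * x5); split_lra. } }
      { exists 0, 0, x5, 0, 0, 0, (x1 - x4), 0, (- 2/3 * x1 + 4/3 * x4 - 2/3 * x5); split_lra. }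
      { exists 0, 0, x5, (- x1 + x4), 0, 0, 0, 0, (4/3 * x1 - 2/3 * x4 - 2/3 * x5); split_lra. } }
    { cases_on_max [1/3 * x1 - x2 + 1/3 * x4 + 1/3 * x5; 1/3 * x1 - x3 + 1/3 * x4 + 1/3 * x5;
          1/3 * x1 + x3 - 2/3 * x4 - 2/3 * x5; 2/3 * x1 - 1/3 * x4 - 1/3 * x5;
          1/3 * x1 + x2 - 2/3 * x4 - 2/3 * x5].
      { cases_on_max [1/3 * x1 - 1/2 * x2 + 1/2 * x3 - 1/6 * x4 - 1/6 * x5;
            2/3 * x1 - 1/3 * x4 - 1/3 * x5; - 2/3 * x1 - x2 + x3 + 1/3 * x4 + 1/3 * x5].
        { exists 0, 0, x5, (1/2 * x2 - 1/2 * x3 + 1/2 * x4 - 1/2 * x5), 0, 0,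
            (x1 + 1/2 * x2 - 1/2 * x3 - 1/2 * x4 - 1/2 * x5), 0,
            (- 2/3 * x1 - x2 + x3 + 1/3 * x4 + 1/3 * x5); split_lra. }
        { exists 0, 0, x5, (- 1/3 * x1 + 2/3 * x4 - 1/3 * x5), 0, 0,
            (2/3 * x1 - 1/3 * x4 - 1/3 * x5), 0, 0; split_lra. }
        { exists 0, 0, x5, (- x1 + x4), 0, 0, 0, 0, (4/3 * x1 - 2/3 * x4 - 2/3 * x5); split_lra. } }
      { cases_on_max [2/3 * x1 - 1/3 * x4 - 1/3 * x5;
            1/3 * x1 + 1/2 * x2 - 1/2 * x3 - 1/6 * x4 - 1/6 * x5;
            - 2/3 * x1 + x2 - x3 + 1/3 * x4 + 1/3 * x5].
        { exists 0, 0, x5, (- 1/3 * x1 + 2/3 * x4 - 1/3 * x5), 0, 0,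
            (2/3 * x1 - 1/3 * x4 - 1/3 * x5), 0, 0; split_lra. }
        { exists 0, 0, x5, (- 1/2 * x2 + 1/2 * x3 + 1/2 * x4 - 1/2 * x5), 0, 0,
            (x1 - 1/2 * x2 + 1/2 * x3 - 1/2 * x4 - 1/2 * x5), 0,
            (- 2/3 * x1 + x2 - x3 + 1/3 * x4 + 1/3 * x5); split_lra. }
        { exists 0, 0, x5, (- x1 + x4), 0, 0, 0, 0, (4/3 * x1 - 2/3 * x4 - 2/3 * x5); split_lra. } }
      { exists 0, 0, x5, (- x3 + x4), 0, 0, (x1 - x3), 0,
          (- 2/3 * x1 + 2 * x3 - 2/3 * x4 - 2/3 * x5); split_lra. }
      { exists 0, 0, x5, (- 1/3 * x1 + 2/3 * x4 - 1/3 * x5), 0, 0,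
          (2/3 * x1 - 1/3 * x4 - 1/3 * x5), 0, 0; split_lra. }
      { exists 0, 0, x5, (- x2 + x4), 0, 0, (x1 - x2), 0,
          (- 2/3 * x1 + 2 * x2 - 2/3 * x4 - 2/3 * x5); split_lra. } }
    { exists 0, 0, (- x3 + x4 + x5), 0, 0, 0, (x1 - x3), (2 * x3 - 2 * x4),
        (- 2/3 * x1 + 4/3 * x4 - 2/3 * x5); split_lra. } }
  { cases_on_max [1/3 * x2 - 1/2 * x3 + 1/3 * x4 + 1/3 * x5; 1/3 * x2 + 1/3 * x4 - 2/3 * x5;
        - 1/3 * x2 + 2/3 * x4 + 2/3 * x5; 1/2 * x1 - 1/6 * x2 + 1/3 * x4 + 1/3 * x5].
    { cases_on_max [1/3 * x2 + 1/3 * x4 - 2/3 * x5; x1 + 1/3 * x2 - 1/2 * x3 - 2/3 * x4 + 1/3 * x5;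
          x1 - 2/3 * x2 + 1/2 * x3 + 1/3 * x4 + 1/3 * x5].
      { cases_on_max [1/2 * x1 + 1/3 * x2 - 1/4 * x3 - 1/6 * x4 - 1/6 * x5;
            x1 - 2/3 * x2 + 1/2 * x3 + 1/3 * x4 + 1/3 * x5].
        { exists (1/2 * x3), (- 1/6 * x1 + 1/3 * x2 - 1/4 * x3 - 1/6 * x4 - 1/6 * x5),
            (- 1/2 * x3 + x5), (- 1/2 * x1 + 1/4 * x3 + 1/2 * x4 - 1/2 * x5), 0, 0, 0, 0,
            (2/3 * x1); split_lra. }
        { exists (1/2 * x3), 0, (- 1/2 * x3 + x5), (- x2 + x3 + x4), 0, 0, 0, 0,
            (4/3 * x2 - x3 - 2/3 * x4 - 2/3 * x5); split_lra. } }
      { cases_on_max [1/3 * x2 + 1/3 * x4 - 2/3 * x5; x1 - 1/6 * x2 - 1/6 * x4 + 1/3 * x5].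
        { exists (x1 - x4 + x5), (- 2/3 * x1 + 1/3 * x2 + 1/3 * x4 - 2/3 * x5), (- x1 + x4), 0, 0,
            0, 0, 0, (2/3 * x1); split_lra. }
        { exists (1/2 * x2 - 1/2 * x4), 0, (- 1/2 * x2 + 1/2 * x4 + x5), 0, 0, 0, 0, 0,
            (1/3 * x2 + 1/3 * x4 - 2/3 * x5); split_lra. } }
      { exists (1/2 * x3), 0, (- 1/2 * x3 + x5), (- x2 + x3 + x4), 0, 0, 0, 0,
          (4/3 * x2 - x3 - 2/3 * x4 - 2/3 * x5); split_lra. } }
    { cases_on_max [1/3 * x2 - 1/2 * x3 + 1/3 * x4 + 1/3 * x5; 1/2 * x4; 1/3 * x1 + 1/3 * x4;
          - 2/3 * x2 + x3 + 1/3 * x4 - 2/3 * x5].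
      { cases_on_max [1/2 * x1 + 1/3 * x2 - 1/2 * x3 - 1/6 * x4 + 1/3 * x5;
            x1 - 2/3 * x2 + x3 + 1/3 * x4 - 2/3 * x5].
        { exists x5, (- 1/6 * x1 + 1/3 * x2 - 1/6 * x4 - 2/3 * x5), 0, (- 1/2 * x1 + 1/2 * x4), 0,
            0, 0, 0, (2/3 * x1); split_lra. }
        { exists x5, (1/2 * x3 - x5), 0, (- x2 + 3/2 * x3 + x4 - x5), 0, 0, 0, 0,
            (4/3 * x2 - 2 * x3 - 2/3 * x4 + 4/3 * x5); split_lra. } }
      { exists x5, (1/3 * x2 - 1/6 * x4 - 2/3 * x5), 0, (1/2 * x4), 0, 0, 0, 0, 0; split_lra. }
      { exists x5, (- 1/3 * x1 + 1/3 * x2 - 2/3 * x5), 0, (- x1 + x4), 0, 0, 0, 0,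
          (4/3 * x1 - 2/3 * x4); split_lra. }
      { cases_on_max [- x1 - 2/3 * x2 + x3 + 1/3 * x4 - 2/3 * x5;
            - 4/3 * x2 + 2 * x3 - 1/3 * x4 - 4/3 * x5; x1 - 2/3 * x2 + x3 - 2/3 * x4 - 2/3 * x5].
        { exists x5, (x2 - x3), 0, (2/3 * x2 - x3 + 2/3 * x4 + 2/3 * x5), 0,
            (- 4/3 * x2 + 2 * x3 - 1/3 * x4 - 4/3 * x5), 0, 0, 0; split_lra. }
        { exists x5, (x2 - x3), 0, (2/3 * x2 - x3 + 2/3 * x4 + 2/3 * x5), 0,
            (- 4/3 * x2 + 2 * x3 - 1/3 * x4 - 4/3 * x5), 0, 0, 0; split_lra. }
        { exists x5, (x2 - x3), 0, (- x1 + x4), 0, (- x1 - 2 * x2 + 3 * x3 - 2 * x5), 0, 0,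
            (2 * x1 + 4/3 * x2 - 2 * x3 - 2/3 * x4 + 4/3 * x5); split_lra. } } }
    { exists (2/3 * x2 - 1/3 * x4 - 1/3 * x5), 0, (- 2/3 * x2 + 1/3 * x4 + 4/3 * x5),
        (1/3 * x2 + 1/3 * x4 - 2/3 * x5), 0, 0, 0, 0, 0; split_lra. }
    { exists (- 1/2 * x1 + 1/2 * x2), 0, (1/2 * x1 - 1/2 * x2 + x5), (- x1 + x4), 0, 0, 0, 0,
        (x1 + 1/3 * x2 - 2/3 * x4 - 2/3 * x5); split_lra. } }
  { cases_on_max [- 1/2 * x2 + 1/3 * x3 + 1/3 * x4 + 1/3 * x5; 1/3 * x3 + 1/3 * x4 - 2/3 * x5;
        x1 + 1/3 * x3 - 2/3 * x4 - 2/3 * x5; x1 - 1/3 * x3 - 1/3 * x4 + 2/3 * x5;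
        - 1/3 * x3 + 2/3 * x4 + 2/3 * x5; 1/2 * x1 - 1/6 * x3 + 1/3 * x4 + 1/3 * x5].
    { cases_on_max [1/3 * x3 + 1/3 * x4 - 2/3 * x5; - 1/2 * x2 + 2/3 * x3 - 1/3 * x4 - 1/3 * x5;
          1/2 * x1 - 1/4 * x2 + 1/3 * x3 - 1/6 * x4 - 1/6 * x5; x1 - 1/3 * x3 - 1/3 * x4 + 2/3 * x5;
          x1 + 1/2 * x2 - 2/3 * x3 + 1/3 * x4 + 1/3 * x5].
      { cases_on_max [- 1/2 * x2 + 2/3 * x3 - 1/3 * x4 - 1/3 * x5;
            1/2 * x1 - 1/4 * x2 + 1/3 * x3 - 1/6 * x4 - 1/6 * x5;
            x1 + 1/2 * x2 - 2/3 * x3 + 1/3 * x4 + 1/3 * x5].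
        { exists (1/2 * x2), 0, (- 1/2 * x2 + x5), (1/2 * x2 - 1/3 * x3 + 2/3 * x4 - 1/3 * x5), 0,
            (- 1/2 * x2 + 2/3 * x3 - 1/3 * x4 - 1/3 * x5), 0, 0, 0; split_lra. }
        { exists (1/2 * x2), 0, (- 1/2 * x2 + x5), (- 1/2 * x1 + 1/4 * x2 + 1/2 * x4 - 1/2 * x5),
            0, (- 1/2 * x1 - 3/4 * x2 + x3 - 1/2 * x4 - 1/2 * x5), 0, 0,
            (x1 + 1/2 * x2 - 2/3 * x3 + 1/3 * x4 + 1/3 * x5); split_lra. }
        { exists (1/2 * x2), 0, (- 1/2 * x2 + x5), (x2 - x3 + x4), 0, 0, 0, 0,
            (- x2 + 4/3 * x3 - 2/3 * x4 - 2/3 * x5); split_lra. } }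
      { exists (1/2 * x2), 0, (- 1/3 * x3 + 2/3 * x4 + 2/3 * x5), 0,
          (- 1/2 * x2 + 1/3 * x3 - 2/3 * x4 + 1/3 * x5), (1/3 * x3 + 1/3 * x4 - 2/3 * x5), 0, 0,
          0; split_lra. }
      { cases_on_max [1/3 * x3 + 1/3 * x4 - 2/3 * x5;
            x1 + 1/2 * x2 - 2/3 * x3 + 1/3 * x4 + 1/3 * x5].
        { exists (1/2 * x2), 0, (- 1/2 * x1 - 1/4 * x2 + 1/2 * x4 + 1/2 * x5), 0,
            (1/2 * x1 - 1/4 * x2 - 1/2 * x4 + 1/2 * x5), (- x1 - 1/2 * x2 + x3 - x5), 0, 0,
            (x1 + 1/2 * x2 - 2/3 * x3 + 1/3 * x4 + 1/3 * x5); split_lra. }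
        { exists (1/2 * x2), 0, (- 1/2 * x1 - 1/4 * x2 + 1/2 * x4 + 1/2 * x5), 0,
            (- 1/2 * x1 - 3/4 * x2 + x3 - 1/2 * x4 - 1/2 * x5), 0, 0,
            (2 * x1 + x2 - 2 * x3 + 2 * x5),
            (- x1 - 1/2 * x2 + 4/3 * x3 + 1/3 * x4 - 5/3 * x5); split_lra. } }
      { exists (1/2 * x2), 0, (- 2/3 * x3 + 1/3 * x4 + 4/3 * x5), 0,
          (- 1/2 * x2 + 1/3 * x3 - 2/3 * x4 + 1/3 * x5), 0, 0, (2/3 * x3 + 2/3 * x4 - 4/3 * x5),
          0; split_lra. }
      { cases_on_max [1/3 * x3 + 1/3 * x4 - 2/3 * x5; - x2 + 4/3 * x3 - 2/3 * x4 - 2/3 * x5].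
        { exists (1/2 * x2), 0, (- 1/2 * x2 + x5), (x2 - x3 + x4), 0, 0, 0, 0,
            (- x2 + 4/3 * x3 - 2/3 * x4 - 2/3 * x5); split_lra. }
        { exists (1/2 * x2), 0, (1/2 * x2 - x3 + x4 + x5), 0, 0, 0, 0,
            (- 2 * x2 + 2 * x3 - 2 * x4), (x2 - 2/3 * x3 + 4/3 * x4 - 2/3 * x5); split_lra. } } }
    { cases_on_max [- x1 + 1/3 * x3 + 1/3 * x4 - 2/3 * x5; - x2 + 1/3 * x3 + 1/3 * x4 + 4/3 * x5;
          2/3 * x3 - 1/3 * x4 - 4/3 * x5; x1 + 1/3 * x3 - 2/3 * x4 - 2/3 * x5].
      { exists x5, 0, 0, (- 1/3 * x3 + 2/3 * x4 + 2/3 * x5), 0, (2/3 * x3 - 1/3 * x4 - 4/3 * x5),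
          0, 0, 0; split_lra. }
      { cases_on_max [2/3 * x3 - 1/3 * x4 - 4/3 * x5;
            1/2 * x1 - 1/2 * x2 + 1/3 * x3 - 1/6 * x4 + 1/3 * x5;
            x1 - x2 - 2/3 * x3 + 1/3 * x4 + 10/3 * x5].
        { exists x5, 0, 0, (- 1/3 * x3 + 2/3 * x4 + 2/3 * x5), 0, (2/3 * x3 - 1/3 * x4 - 4/3 * x5),
            0, 0, 0; split_lra. }
        { exists x5, 0, 0, (- 1/2 * x1 + 1/2 * x2 + 1/2 * x4 - x5), 0,
            (- 1/2 * x1 + 1/2 * x2 + x3 - 1/2 * x4 - 3 * x5), 0, 0,
            (x1 - x2 - 2/3 * x3 + 1/3 * x4 + 10/3 * x5); split_lra. }
        { exists x5, 0, 0, (- x3 + x4 + 2 * x5), 0, 0, 0, 0,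
            (4/3 * x3 - 2/3 * x4 - 8/3 * x5); split_lra. } }
      { exists x5, 0, 0, (- 1/3 * x3 + 2/3 * x4 + 2/3 * x5), 0, (2/3 * x3 - 1/3 * x4 - 4/3 * x5),
          0, 0, 0; split_lra. }
      { exists x5, 0, 0, (- x1 + x4), 0, (- x1 + x3 - 2 * x5), 0, 0,
          (2 * x1 - 2/3 * x3 - 2/3 * x4 + 4/3 * x5); split_lra. } }
    { cases_on_max [- x1 - x2 + 1/3 * x3 + 4/3 * x4 + 4/3 * x5; 1/3 * x3 + 1/3 * x4 - 2/3 * x5;
          - 2/3 * x3 + 4/3 * x4 + 4/3 * x5].
      { cases_on_max [1/3 * x3 + 1/3 * x4 - 2/3 * x5; - 2/3 * x3 + 4/3 * x4 + 4/3 * x5].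
        { exists (- x1 + x4 + x5), 0, 0, 0, (x1 - x4), (x3 - x4 - 2 * x5), 0, 0,
            (- 2/3 * x3 + 4/3 * x4 + 4/3 * x5); split_lra. }
        { exists (- x1 + x4 + x5), 0, 0, 0, (x1 + x3 - 2 * x4 - 2 * x5), 0, 0,
            (- 2 * x3 + 2 * x4 + 4 * x5), (4/3 * x3 - 2/3 * x4 - 8/3 * x5); split_lra. } }
      { exists (- x1 + x4 + x5), 0, 0, 0, (x1 - x4), (x3 - x4 - 2 * x5), 0, 0,
          (- 2/3 * x3 + 4/3 * x4 + 4/3 * x5); split_lra. }
      { exists (- x1 + x4 + x5), 0, 0, 0, (x1 + x3 - 2 * x4 - 2 * x5), 0, 0,
          (- 2 * x3 + 2 * x4 + 4 * x5), (4/3 * x3 - 2/3 * x4 - 8/3 * x5); split_lra. } }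
    { exists (- x1 + 2/3 * x3 + 2/3 * x4 - 1/3 * x5), 0, (- 2/3 * x3 + 1/3 * x4 + 4/3 * x5), 0,
        (x1 - 1/3 * x3 - 4/3 * x4 + 2/3 * x5), 0, 0, (2/3 * x3 + 2/3 * x4 - 4/3 * x5),
        0; split_lra. }
    { exists (2/3 * x3 - 1/3 * x4 - 1/3 * x5), 0, (- 2/3 * x3 + 1/3 * x4 + 4/3 * x5),
        (1/3 * x3 + 1/3 * x4 - 2/3 * x5), 0, 0, 0, 0, 0; split_lra. }
    { cases_on_max [- 1/2 * x1 - x2 + 5/6 * x3 + 1/3 * x4 + 1/3 * x5;
          1/3 * x3 + 1/3 * x4 - 2/3 * x5; x1 + 1/3 * x3 - 2/3 * x4 - 2/3 * x5].
      { cases_on_max [1/3 * x3 + 1/3 * x4 - 2/3 * x5; x1 + 1/3 * x3 - 2/3 * x4 - 2/3 * x5].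
        { exists (- 1/2 * x1 + 1/2 * x3), 0, (1/2 * x1 - 1/2 * x3 + x5), (- x1 + x4), 0, 0, 0, 0,
            (x1 + 1/3 * x3 - 2/3 * x4 - 2/3 * x5); split_lra. }
        { exists (- 1/2 * x1 + 1/2 * x3), 0, (- 1/2 * x1 - 1/2 * x3 + x4 + x5), 0, 0, 0, 0,
            (2 * x1 - 2 * x4), (- x1 + 1/3 * x3 + 4/3 * x4 - 2/3 * x5); split_lra. } }
      { exists (- 1/2 * x1 + 1/2 * x3), 0, (1/2 * x1 - 1/2 * x3 + x5), (- x1 + x4), 0, 0, 0, 0,
          (x1 + 1/3 * x3 - 2/3 * x4 - 2/3 * x5); split_lra. }
      { exists (- 1/2 * x1 + 1/2 * x3), 0, (- 1/2 * x1 - 1/2 * x3 + x4 + x5), 0, 0, 0, 0,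
          (2 * x1 - 2 * x4), (- x1 + 1/3 * x3 + 4/3 * x4 - 2/3 * x5); split_lra. } } }
Qed.

Lemma ex_capacity_of_polytope Rt : ex_polytope Rt -> capacity_region 5 3 S_ex A_ex C_ex Rt.
Proof.
  intros (H1 & H2 & H3 & H4 & H5 & H6 & H7 & H8 & H9 & H10 & H11 & H12 & H13 & H14) eps Heps.
  destruct (ex_time_sharing _ _ _ _ _ H1 H2 H3 H4 H5 H6 H7 H8 H9 H10 H11 H12 H13 H14)
    as (l0 & l1 & l2 & l3 & l4 & l5 & l6 & l7 & l8 & G0 & G1 & G2 & G3 & G4 & G5 & G6 & G7 & G8
        & Gsum & D1 & D2 & D3 & D4 & D5).
  (* Types 7 and 8 occupy two slots of every sender, so each gets half of its time share. *)
  set (mu (t : nat) := match t with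
     | 0%nat => l0 | 1%nat => l1 | 2%nat => l2 | 3%nat => l3 | 4%nat => l4 | 5%nat => l5
     | 6%nat => l6 | 7%nat => l7 / 2 | 8%nat => l8 / 2 | _ => 0 end).
  exists (fun j => Rmax 0 (Rt j - eps / 2)). split.
  - apply (xor_scheme_achievable 5 3 S_ex A_ex C_ex ex_scheme ex_scheme_valid mu)
      with (eps := eps / 2).
    + intros t. unfold mu. destruct t as [|[|[|[|[|[|[|[|[|t]]]]]]]]]; lra.
    + intros k _. cbn. unfold C_ex. lra.
    + lra.
    + intros j Hj. split; [apply Rmax_l|]. unfold Rmax.
      destruct (Rle_dec 0 (Rt j - eps / 2)); [right | now left].
      destruct j as [|[|[|[|[|[|j]]]]]]; try lia; cbn; lra.
  - intros j Hj. unfold Rmax.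
    assert (0 <= Rt j) by (destruct j as [|[|[|[|[|[|j]]]]]]; try lia; auto).
    destruct (Rle_dec 0 (Rt j - eps / 2)); rewrite Rabs_right; lra.
Qed.

Theorem mainTheorem7 : forall Rt : nat -> R,
  capacity_region 5 3 S_ex A_ex C_ex Rt <->
  (0 <= Rt 1%nat /\ 0 <= Rt 2%nat /\ 0 <= Rt 3%nat /\ 0 <= Rt 4%nat /\
   0 <= Rt 5%nat /\
   Rt 3%nat <= 2 /\ Rt 5%nat <= 1 /\
   Rt 1%nat + Rt 3%nat <= 3 /\ Rt 1%nat + Rt 5%nat <= 2 /\
   Rt 4%nat + Rt 5%nat <= 2 /\
   Rt 1%nat + Rt 2%nat + Rt 5%nat <= 3 /\
   Rt 1%nat + Rt 4%nat + Rt 5%nat <= 3 /\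
   Rt 2%nat + Rt 4%nat + Rt 5%nat <= 3 /\
   Rt 3%nat + Rt 4%nat + Rt 5%nat <= 3).
Proof.
  intros Rt. split.
  - apply ex_polytope_of_capacity.
  - apply ex_capacity_of_polytope.
Qed.
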